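(* Let $C$ be a cycle and $T$ a shortcut tree for $C$ with respect to a length-function $\ell$ on $T\cup C$, and assume $V(C)=L(T)$, $|L(T)|\ge 3$, and $T$ has no vertex of degree $2$. Then $T\cup C$ is planar and $3$-regular.
   Context: Graphs are finite, parallel edges allowed, no loops. A length-function is a map $\ell:E\to\mathbb{R}^+$ (strictly positive reals); $\ell(H)=\sum_{e\in E(H)}\ell(e)$. $\mathrm{sd}_G(A)$ is the minimum of $\ell(S)$ over connected subgraphs $S\subseteq G$ with $A\subseteq V(S)$. $L(T)$ is the set of leaves of $T$. Shortcut tree: let $H$ be a graph, $T$ a tree, both subgraphs of $T\cup H$, and $\ell$ a length-function on $T\cup H$. Then $T$ is a shortcut tree for $H$ if (SCT1) $V(T)\cap V(H)=L(T)$; (SCT2) $E(T)\cap E(H)=\emptyset$; (SCT3) $\ell(T)<\mathrm{sd}_H(L(T))$; (SCT4) for every proper subset $B\subsetneq L(T)$, $\mathrm{sd}_H(B)\le\mathrm{sd}_T(B)$. *)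

From Stdlib Require Import Reals.
From mathcomp Require Import all_boot.

Set Implicit Arguments.
Unset Strict Implicit.
Unset Printing Implicit Defensive.

(* A finite multigraph: vertex type V, edge type E, each edge e has the
   (ordered, but only used up to orientation) pair of endpoints [ends e].
   Parallel edges are allowed; loops are excluded by a hypothesis in the
   theorem. *)
Section Graphs.
Variables (V E : finType) (ends : E -> V * V).

Definition joins (e : E) (u v : V) : bool :=
  (ends e == (u, v)) || (ends e == (v, u)).

Definition incident (e : E) (v : V) : bool :=
  ((ends e).1 == v) || ((ends e).2 == v).

Definition is_subgraph (VS : {set V}) (ES : {set E}) : Prop :=
  forall e, e \in ES -> ((ends e).1 \in VS) && ((ends e).2 \in VS).

(* degree of v in the subgraph with edge set ES (no loops, so each
   incident edge contributes 1) *)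
Definition deg (ES : {set E}) (v : V) : nat :=
  #|[set e in ES | incident e v]|.

Definition adj (ES : {set E}) : rel V :=
  fun u v => [exists e in ES, joins e u v].

Definition connected (VS : {set V}) (ES : {set E}) : Prop :=
  forall u v, u \in VS -> v \in VS -> connect (adj ES) u v.

(* (VS, ES) is a cycle x_0 e_0 x_1 e_1 ... x_{k-1} e_{k-1} x_0 with
   distinct vertices and distinct edges, k >= 2 (k = 2 is a pair of
   parallel edges, as parallel edges are allowed). *)
Definition is_cycle (VS : {set V}) (ES : {set E}) : Prop :=
  exists (k : nat) (f : 'I_k -> V) (g : 'I_k -> E),
    [/\ 2 <= k, injective f, injective g
      & forall i, joins (g i) (f i) (f (ordS i))] /\
    VS = [set f i | i : 'I_k] /\ ES = [set g i | i : 'I_k].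

Definition acyclic (VS : {set V}) (ES : {set E}) : Prop :=
  forall (VS' : {set V}) (ES' : {set E}), VS' \subset VS -> ES' \subset ES -> ~ is_cycle VS' ES'.

Definition is_tree (VS : {set V}) (ES : {set E}) : Prop :=
  [/\ is_subgraph VS ES, VS != set0, connected VS ES & acyclic VS ES].

Definition leaves (VS : {set V}) (ES : {set E}) : {set V} :=
  [set v in VS | deg ES v == 1].

Variable l : E -> R.

Definition len (ES : {set E}) : R := \big[Rplus/R0]_(e in ES) l e.

Definition conn_sub_cont (VH : {set V}) (EH : {set E}) (A : {set V})
    (VS : {set V}) (ES : {set E}) : Prop :=
  [/\ VS \subset VH, ES \subset EH, is_subgraph VS ES, connected VS ES
    & A \subset VS].

(* x < sd_H(A)   (with sd_H(A) = +infinity if no such S exists; the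
   minimum is over a finite set, so it is attained) *)
Definition sd_gt (VH : {set V}) (EH : {set E}) (A : {set V}) (x : R) : Prop :=
  forall (VS : {set V}) (ES : {set E}), conn_sub_cont VH EH A VS ES -> Rlt x (len ES).

(* sd_{H1}(A) <= sd_{H2}(A)  (minima over finite sets, +infinity if empty) *)
Definition sd_le (VH1 : {set V}) (EH1 : {set E}) (VH2 : {set V})
    (EH2 : {set E}) (A : {set V}) : Prop :=
  forall (VS2 : {set V}) (ES2 : {set E}), conn_sub_cont VH2 EH2 A VS2 ES2 ->
    exists (VS1 : {set V}) (ES1 : {set E}), conn_sub_cont VH1 EH1 A VS1 ES1 /\ Rle (len ES1) (len ES2).

Definition shortcut_tree (VT : {set V}) (ET : {set E})
    (VH : {set V}) (EH : {set E}) : Prop :=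
  [/\ VT :&: VH = leaves VT ET,
      ET :&: EH = set0,
      sd_gt VH EH (leaves VT ET) (len ET)
    & forall B : {set V}, B \proper leaves VT ET -> sd_le VH EH VT ET B].

(* Planarity of the whole multigraph (V, E, ends): an embedding in R^2
   with vertices as distinct points and edges as arcs (continuous
   injective images of [0,1]) joining their endpoints, whose interiors
   are pairwise disjoint and avoid all vertices and other arcs. *)
Definition cont01 (g : R -> R * R) : Prop :=
  forall t, Rle R0 t -> Rle t R1 -> forall eps, Rlt R0 eps ->
    exists d, Rlt R0 d /\ forall s, Rle R0 s -> Rle s R1 ->
      Rlt (Rabs (Rminus s t)) d ->
      Rlt (Rabs (Rminus (fst (g s)) (fst (g t)))) eps /\
      Rlt (Rabs (Rminus (snd (g s)) (snd (g t)))) eps.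

Definition planar : Prop :=
  exists (pos : V -> R * R) (arc : E -> R -> R * R),
    [/\ injective pos,
        (forall e, [/\ cont01 (arc e), arc e R0 = pos (ends e).1
                     & arc e R1 = pos (ends e).2]),
        (forall e e' t t', Rlt R0 t -> Rlt t R1 -> Rle R0 t' -> Rle t' R1 ->
            arc e t = arc e' t' -> e = e' /\ t = t')
      & (forall e v t, Rlt R0 t -> Rlt t R1 -> arc e t <> pos v)].

End Graphs.

From Stdlib Require Import Reals.
From mathcomp Require Import all_boot.
From HB Require Import structures.
From Stdlib Require Import Lia Lra.
From mathcomp Require Import zify.

Set Implicit Arguments.
Unset Strict Implicit.
Unset Printing Implicit Defensive.

(** Root T at the leaf r = f n of C and let D(u) be the set of leaves below u.
    The shortcut-tree axioms forbid interleaving: if A and L(T) \ A alternate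
    around C and are spanned by edge-disjoint connected subgraphs of T, then SCT4
    yields connected subgraphs of C spanning A and L(T) \ A; since they alternate
    around C these meet, so their union spans L(T) and has length at most l(T),
    contradicting SCT3.  Cutting T at a subtree shows that each D(u) is an
    interval of C avoiding n; cutting at two of three children of a vertex shows
    that no vertex has three children.  So every non-leaf has degree 3 (degree 2
    is excluded), and every leaf has one tree edge and two cycle edges.
    Drawing u at (min D(u), max D(u)) puts the children of u at pairwise disjoint
    boxes nested in the box of u, which makes the straight tree edges pairwise
    disjoint; the leaves then lie on the diagonal, consecutive ones joined by
    segments, and the two cycle edges at r = (0, n) are parabolic arcs bent away
    from the tree. *)

Section Basics.
Variables (V E : finType) (ends : E -> V * V).
Hypothesis noloop : forall e, (ends e).1 <> (ends e).2.

Lemma joinsC e u v : joins ends e u v = joins ends e v u.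
Proof. by rewrite /joins orbC. Qed.

Lemma joins_neq e u v : joins ends e u v -> u != v.
Proof.
move=> J; apply/eqP => Huv; subst v; move: J.
rewrite /joins orbb => /eqP He; by have := @noloop e; rewrite He.
Qed.

Lemma joins_incident e u v : joins ends e u v -> incident ends e u && incident ends e v.
Proof. by rewrite /joins /incident => /orP[] /eqP ->; rewrite /= !eqxx ?orbT. Qed.

Lemma incident_joins e u : incident ends e u -> exists w, joins ends e u w.
Proof.
rewrite /incident /joins; case: (ends e) => a b /= /orP[] /eqP ->.
- by exists b; rewrite eqxx.
- by exists a; rewrite eqxx orbT.
Qed.

Lemma joins_ends e u v : joins ends e u v ->
  ((ends e).1 == u) && ((ends e).2 == v) || ((ends e).1 == v) && ((ends e).2 == u).
Proof. by rewrite /joins; case: (ends e) => a b /= /orP[] /eqP [-> ->]; rewrite !eqxx ?orbT. Qed.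

Lemma joins_same_end e u v w : joins ends e u v -> joins ends e u w -> v = w.
Proof.
rewrite /joins; case: (ends e) => a b /=.
by move=> /orP[] /eqP [<- <-] /orP[] /eqP [] // => [Ha Hb|Ha Hb]; subst;
  first [by [] | exfalso; apply: (@noloop e); rewrite ?Ha ?Hb ].
Qed.

Lemma adj_sym (F : {set E}) : symmetric (adj ends F).
Proof.
move=> u v; rewrite /adj; apply/existsP/existsP => [] [e He]; exists e;
  by rewrite joinsC.
Qed.

Lemma adj_subset (F G : {set E}) : F \subset G -> subrel (adj ends F) (adj ends G).
Proof.
move=> FG u v /existsP [e /andP [eF J]]; apply/existsP; exists e.
by rewrite J (subsetP FG).
Qed.

Lemma connect_adj_subset (F G : {set E}) x y : F \subset G ->
  connect (adj ends F) x y -> connect (adj ends G) x y.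
Proof. move=> FG; apply: connect_sub => u v H; apply: connect1; exact: adj_subset H. Qed.

Lemma connect_adjC (F : {set E}) x y :
  connect (adj ends F) x y = connect (adj ends F) y x.
Proof. by apply: sym_connect_sym; apply: adj_sym. Qed.

Lemma joins_endpoints e : joins ends e (ends e).1 (ends e).2.
Proof. by rewrite /joins; case: (ends e) => a b; rewrite eqxx. Qed.

Lemma joins_ends_eq e a b c d : joins ends e a b -> joins ends e c d ->
  (a = c /\ b = d) \/ (a = d /\ b = c).
Proof.
rewrite /joins => /orP[] /eqP -> /orP[] /eqP [] -> ->; by [left | right].
Qed.

Lemma connect_uniq_path (e : rel V) x y : connect e x y ->
  exists p, [/\ path e x p, last x p = y & uniq (x :: p)].
Proof.
move=> /connectP [p Pp ->]; case: (shortenP Pp) => p' Pp' Up' _.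
by exists p'.
Qed.

Lemma path_connect_prefix (e : rel V) y q x : path e y q -> x \in y :: q -> connect e y x.
Proof.
move=> P; rewrite inE => /orP [/eqP -> //|xq].
case/splitPr: xq P => p1 p2; rewrite cat_path /= => /and3P [P1 Hx _].
apply/connectP; exists (rcons p1 x); first by rewrite rcons_path P1.
by rewrite last_rcons.
Qed.

Lemma path_connect_suffix (e : rel V) y q x : path e y q -> x \in y :: q ->
  connect e x (last y q).
Proof.
move=> P; rewrite inE => /orP [/eqP -> |xq]; first by apply/connectP; exists q.
case/splitPr: xq P => p1 p2; rewrite cat_path /= => /and3P [_ _ P2].
by apply/connectP; exists p2 => //; rewrite last_cat.
Qed.

Lemma conn_sub_cont_setU (VH : {set V}) (EH : {set E}) (A1 A2 B VS1 VS2 : {set V})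
    (ES1 ES2 : {set E}) c :
  conn_sub_cont ends VH EH A1 VS1 ES1 -> conn_sub_cont ends VH EH A2 VS2 ES2 ->
  c \in VS1 -> c \in VS2 -> B \subset A1 :|: A2 ->
  conn_sub_cont ends VH EH B (VS1 :|: VS2) (ES1 :|: ES2).
Proof.
move=> [sW1 sF1 sg1 cn1 AW1] [sW2 sF2 sg2 cn2 AW2] cW1 cW2 sB; split.
- by rewrite subUset sW1.
- by rewrite subUset sF1.
- move=> e; rewrite inE => /orP [] H; [move: (sg1 e H) | move: (sg2 e H)];
    by rewrite !inE => /andP [-> ->]; rewrite ?orbT.
- have Cc x : x \in VS1 :|: VS2 -> connect (adj ends (ES1 :|: ES2)) x c.
    rewrite inE => /orP [] Hx.
      exact: connect_adj_subset (subsetUl _ _) (cn1 x c Hx cW1).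
    exact: connect_adj_subset (subsetUr _ _) (cn2 x c Hx cW2).
  move=> x y Hx Hy; apply: (connect_trans (Cc x Hx)).
  by rewrite connect_adjC; apply: Cc.
- exact: subset_trans sB (setUSS AW1 AW2).
Qed.

Lemma closed_path_cycle (F : {set E}) e u v p : path (adj ends F) v p ->
  last v p = u -> uniq (v :: p) -> e \notin F -> joins ends e u v ->
  exists (VS : {set V}) (ES : {set E}), ES \subset e |: F /\ is_cycle ends VS ES.
Proof.
move=> P L U eF J.
have uv := joins_neq J.
have m0 : 0 < size p.
  by case: p P L U => //= _ L _; move: uv; rewrite -L eqxx.
set m := size p.
pose s := v :: p.
have Hs : size s = m.+1 by [].
pose f := fun i : 'I_(m.+1) => nth v s i.
pose h := fun i : nat => odflt e [pick e' in F | joins ends e' (nth v s i) (nth v s i.+1)].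
pose g := fun i : 'I_(m.+1) => if i < m then h i else e.
have Hh : forall i, i < m -> h i \in F /\ joins ends (h i) (nth v s i) (nth v s i.+1).
  move=> i Hi; have := (pathP v P) i Hi => /existsP [e0 He0].
  rewrite /h; case: pickP => [e1 /andP [? ?] //| /(_ e0)]; by rewrite He0.
have Nu : forall a b : nat, a < m.+1 -> b < m.+1 ->
    (nth v s a == nth v s b) = (a == b).
  by move=> a b Ha Hb; apply: nth_uniq.
have Hlast : nth v s m = u by rewrite -L /s (last_nth v).
exists [set f i | i in 'I_(m.+1)], [set g i | i in 'I_(m.+1)]; split.
  apply/subsetP => x /imsetP [i _ ->]; rewrite /g !inE.
  by case: ifP => [/Hh [-> _] | _]; rewrite ?eqxx ?orbT.
exists m.+1, f, g; split => //; split => //.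
- move=> i j /eqP; rewrite /f Nu ?ltn_ord //.
  by move/eqP => /val_inj.
- move=> i j; rewrite /g.
  case: ifP => Hi; case: ifP => Hj.
  + move=> Eh; have [_ J1] := Hh _ Hi; have [_ J2] := Hh _ Hj.
    rewrite Eh in J1; apply: val_inj => /=.
    case: (joins_ends_eq J1 J2) => [[E1 _]|[E1 E2]].
      by apply/eqP; move: E1 => /eqP; rewrite Nu ?ltn_ord //; lia.
    move: E1 E2 => /eqP E1 /eqP E2.
    move: E1; rewrite Nu ?ltnS ?ltn_ord //; try lia; move: E2;
      rewrite Nu ?ltnS //; try lia.
  + move=> Eh; have [H _] := Hh _ Hi; by move: H; rewrite Eh (negbTE eF).
  + move=> Eh; have [H _] := Hh _ Hj; by move: H; rewrite -Eh (negbTE eF).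
  + move=> _; apply: val_inj; move: (ltn_ord i) (ltn_ord j); rewrite !ltnS.
    move: Hi Hj => /negbT; rewrite -leqNgt => ? /negbT; rewrite -leqNgt => ? ? ?.
    by apply/eqP; rewrite eqn_leq; apply/andP; split; apply: leq_trans; eauto.
- move=> i; rewrite /g /f /=.
  case: ifP => Hi.
  + have -> : i.+1 %% m.+1 = i.+1 by rewrite modn_small.
    by have [_ ] := Hh _ Hi.
  + have Him : nat_of_ord i = m.
      by move: (ltn_ord i) Hi; rewrite ltnS leq_eqVlt => /orP [/eqP -> //| ->].
    rewrite Him modnn /= Hlast. exact: J.
Qed.
End Basics.

Lemma uniq_cat_notin_l (T : eqType) (s1 s2 : seq T) x : uniq (s1 ++ s2) -> x \in s2 -> x \notin s1.
Proof. by rewrite cat_uniq => /and3P [_ /hasPn H _] /H. Qed.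

Lemma uniq_cat_notin_r (T : eqType) (s1 s2 : seq T) x : uniq (s1 ++ s2) -> x \in s1 -> x \notin s2.
Proof.
rewrite cat_uniq => /and3P [_ /hasPn H _] xs1; apply/negP => xs2.
by have := H x xs2; rewrite /= xs1.
Qed.

Lemma ltn_total3 (a b c : nat) : a <> b -> a <> c -> b <> c ->
  (a < b /\ b < c) \/ (a < c /\ c < b) \/ (b < a /\ a < c) \/
  (b < c /\ c < a) \/ (c < a /\ a < b) \/ (c < b /\ b < a).
Proof. move=> *; lia. Qed.

Lemma Rplus_associative : associative Rplus. Proof. by move=> *; rewrite Rplus_assoc. Qed.
HB.instance Definition _ := Monoid.isComLaw.Build R R0 Rplus Rplus_associative Rplus_comm Rplus_0_l.

Section Len.
Variables (E : finType) (l : E -> R).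
Hypothesis lpos : forall e, Rle R0 (l e).

Definition len_ind (X : {set E}) e := if e \in X then l e else R0.

Lemma lenE X : len l X = \big[Rplus/R0]_e len_ind X e.
Proof. by rewrite /len big_mkcond. Qed.

Lemma bigR_le (F G : E -> R) : (forall e, Rle (F e) (G e)) ->
  Rle (\big[Rplus/R0]_e F e) (\big[Rplus/R0]_e G e).
Proof.
move=> H; apply: (big_ind2 (fun a b => Rle a b)); first exact: Rle_refl.
  by move=> *; apply: Rplus_le_compat.
by move=> e _; apply: H.
Qed.

Lemma len_setU (X Y : {set E}) : Rle (len l (X :|: Y)) (Rplus (len l X) (len l Y)).
Proof.
rewrite !lenE -big_split /=; apply: bigR_le => e; rewrite /len_ind inE.
have := lpos e.
case: (e \in X); case: (e \in Y) => /= H; lra.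
Qed.

Lemma len_disjoint (X Y Z : {set E}) : [disjoint X & Y] -> X \subset Z -> Y \subset Z ->
  Rle (Rplus (len l X) (len l Y)) (len l Z).
Proof.
move=> dXY sXZ sYZ; rewrite !lenE -big_split /=; apply: bigR_le => e; rewrite /len_ind.
have := lpos e.
case: (boolP (e \in X)) => eX; case: (boolP (e \in Y)) => eY H.
- by move: dXY; rewrite disjoints_subset => /subsetP /(_ e eX); rewrite inE eY.
- rewrite (subsetP sXZ e eX); lra.
- rewrite (subsetP sYZ e eY); lra.
- case: (e \in Z); lra.
Qed.
End Len.

Section RealFacts.
Local Open Scope R_scope.

Lemma quadratic_lipschitz (q c s t : R) : 0 <= s -> s <= 1 -> 0 <= t -> t <= 1 ->
  Rabs ((q*s + c*(s*(1-s))) - (q*t + c*(t*(1-t)))) <= (Rabs q + Rabs c) * Rabs (s - t).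
Proof.
move=> s0 s1 t0 t1.
have -> : (q*s + c*(s*(1-s))) - (q*t + c*(t*(1-t))) = (s - t) * (q + c * (1 - s - t)) by ring.
rewrite Rabs_mult Rmult_comm; apply: Rmult_le_compat_r; first exact: Rabs_pos.
apply: Rle_trans (Rabs_triang _ _) _; apply: Rplus_le_compat_l.
rewrite Rabs_mult; rewrite -{2}(Rmult_1_r (Rabs c)); apply: Rmult_le_compat_l.
  exact: Rabs_pos.
apply: Rabs_le; lra.
Qed.

Lemma cont01_quadratic (g : R -> R * R) (p1 q1 c1 p2 q2 c2 : R) :
  (forall s, g s = (p1 + q1*s + c1*(s*(1-s)), p2 + q2*s + c2*(s*(1-s)))) ->
  cont01 g.
Proof.
move=> Hg t t0 t1 eps He.
set M := Rabs q1 + Rabs c1 + Rabs q2 + Rabs c2 + 1.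
have HM : 0 < M.
  have := Rabs_pos q1; have := Rabs_pos c1; have := Rabs_pos q2; have := Rabs_pos c2.
  rewrite /M; lra.
exists (eps / M); split; first by apply: Rdiv_lt_0_compat.
move=> s s0 s1 Hst; rewrite !Hg /=.
have Hd : Rabs (s - t) * M < eps.
  have := Rmult_lt_compat_r M _ _ HM Hst.
  by rewrite /Rdiv Rmult_assoc Rinv_l ?Rmult_1_r //; apply: Rgt_not_eq.
have Hp := Rabs_pos (s - t).
have A1 := quadratic_lipschitz q1 c1 s0 s1 t0 t1.
have A2 := quadratic_lipschitz q2 c2 s0 s1 t0 t1.
have B1 : forall p q c, p + q*s + c*(s*(1-s)) - (p + q*t + c*(t*(1-t))) =
  (q*s + c*(s*(1-s))) - (q*t + c*(t*(1-t))) by move=> *; ring.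
rewrite !B1.
have := Rabs_pos q1; have := Rabs_pos c1; have := Rabs_pos q2; have := Rabs_pos c2.
rewrite /M in Hd.
split; nra.
Qed.

Lemma convex_comb_separated (aP bP a1 b1 a2 b2 s s' : R) : aP <= a1 -> a1 <= b1 -> b1 < a2 ->
  a2 <= b2 -> b2 <= bP -> 0 < s -> s < 1 -> 0 < s' -> s' < 1 ->
  (1-s)*aP + s*a1 = (1-s')*aP + s'*a2 -> (1-s)*bP + s*b1 = (1-s')*bP + s'*b2 -> False.
Proof.
move=> h1 h2 h3 h4 h5 s0 s1 t0 t1 E1 E2.
have F1 : s' * (a2 - aP) = s * (a1 - aP) by lra.
have F2 : s * (bP - b1) = s' * (bP - b2) by lra.
have G1 : s' < s.
  have : s' * (a2 - aP) < s * (a2 - aP) by nra.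
  move=> H; apply: (Rmult_lt_reg_r (a2 - aP)); lra.
have G2 : s <= s'.
  have : s * (bP - b1) <= s' * (bP - b1) by nra.
  move=> H; apply: (Rmult_le_reg_r (bP - b1)); lra.
lra.
Qed.

Lemma convex_comb_eq_r (x y s : R) : s < 1 -> (1-s)*x + s*y = y -> x = y.
Proof.
move=> s1 E; have : (1 - s) * (x - y) = 0 by lra.
by case/Rmult_integral => H; lra.
Qed.

Lemma convex_comb_eq_l (x y s : R) : 0 < s -> (1-s)*x + s*y = x -> x = y.
Proof.
move=> s0 E; have : s * (y - x) = 0 by lra.
by case/Rmult_integral => H; lra.
Qed.

Lemma convex_comb_between (x y s : R) : x <= y -> 0 <= s -> s <= 1 ->
  x <= (1-s)*x + s*y <= y.
Proof. move=> *; split; nra. Qed.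

Lemma INR_between_succ (i k : nat) : INR i < INR k -> INR k < INR i + 1 -> False.
Proof.
move=> h1 h2; have := INR_lt _ _ h1; rewrite -S_INR in h2; have := INR_lt _ _ h2.
lia.
Qed.

Lemma INR_le_leq (a b : nat) : INR a <= INR b -> (a <= b)%N.
Proof. by move=> H; apply/leP; apply: INR_le. Qed.

Lemma leq_INR_le (a b : nat) : (a <= b)%N -> INR a <= INR b.
Proof. by move=> /leP; apply: le_INR. Qed.

Lemma INR_pred_lt_leq (m b : nat) : INR m - 1 < INR b -> (m <= b)%N.
Proof.
move=> H; rewrite leqNgt; apply/negP => /leq_INR_le; rewrite S_INR => H'; lra.
Qed.

Lemma flip_open01 s t : (s = t \/ s = 1 - t) -> 0 < t -> t < 1 -> 0 < s /\ s < 1.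
Proof. by case=> -> *; lra. Qed.

Lemma convex_comb_between_rev (x y s : R) : x <= y -> 0 <= s -> s <= 1 ->
  x <= (1-s)*y + s*x <= y.
Proof. move=> *; split; nra. Qed.
End RealFacts.

(** * The tree rooted at a leaf *)

Section Tree.
Variables (V E : finType) (ends : E -> V * V).
Hypothesis noloop : forall e, (ends e).1 <> (ends e).2.
Variables (VT : {set V}) (ET : {set E}).
Hypothesis HVT : forall v, v \in VT.
Hypothesis tree : is_tree ends VT ET.
Variable r : V.

Definition avoiding_edges (w : V) := [set e in ET | ~~ incident ends e w].
Definition adj_avoiding w := adj ends (avoiding_edges w).
Definition adjT := adj ends ET.
(* [below x u]: u lies on every path from x to r, i.e. x is in the subtree of u. *)
Definition below x u := (x == u) || ~~ connect (adj_avoiding u) x r.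

Lemma adj_avoiding_tree w : subrel (adj_avoiding w) adjT.
Proof. by apply: adj_subset; apply/subsetP => e; rewrite inE => /andP []. Qed.

Lemma path_avoiding w x p : path adjT x p -> w \notin x :: p -> path (adj_avoiding w) x p.
Proof.
elim: p x => [//|y p IH] x /= /andP [Hxy Pp].
rewrite !inE negb_or => /andP [xw]; rewrite negb_or => /andP [yw wp].
rewrite IH ?inE ?negb_or ?yw ?wp // andbT.
move: Hxy => /existsP [e /andP [eT J]]; apply/existsP; exists e.
rewrite J andbT inE eT /=; rewrite /incident.
by move: (joins_ends J) => /orP[] /andP [/eqP -> /eqP ->];
  rewrite negb_or (eq_sym x) (eq_sym y) xw yw.
Qed.

Lemma connect_avoiding w a p : path adjT a p -> w \notin a :: p ->
  connect (adj_avoiding w) a (last a p).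
Proof. move=> P W; apply/connectP; exists p => //; exact: path_avoiding. Qed.

Lemma tree_connect x y : connect adjT x y.
Proof. by case: tree => _ _ C _; apply: C. Qed.

Lemma adj_avoiding_neq w a b : adj_avoiding w a b -> (a != w) && (b != w).
Proof.
move=> /existsP [e /andP]; rewrite inE => -[/andP [_ I] J].
move: I; rewrite /incident.
by move: (joins_ends J) => /orP[] /andP [/eqP -> /eqP ->]; rewrite negb_or;
  case/andP => -> ->.
Qed.

Lemma path_avoiding_notin w x p : path (adj_avoiding w) x p -> x != w -> w \notin x :: p.
Proof.
elim: p x => [|y p IH] x /=; first by rewrite inE eq_sym => _ ->.
move=> /andP [H P] xw; move: (adj_avoiding_neq H) => /andP [_ yw].
by rewrite inE negb_or (eq_sym w x) xw /=; apply: IH.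
Qed.

Lemma below_refl x : below x x.
Proof. by rewrite /below eqxx. Qed.

Lemma below_root x : below x r.
Proof.
rewrite /below; case: eqP => //= /eqP xr; apply/negP => /connectP [p P Ep].
have := path_avoiding_notin P xr; by rewrite Ep mem_last.
Qed.

Lemma notbelow_connect x u : ~~ below x u -> connect (adj_avoiding u) x r.
Proof. by rewrite /below negb_or negbK => /andP []. Qed.

Lemma below_on_root_path x u p : below x u -> path adjT x p -> last x p = r -> u \in x :: p.
Proof.
rewrite /below => /orP [/eqP -> _ _|H P L]; first by rewrite mem_head.
apply/negPn/negP => W; move: H; by rewrite -L connect_avoiding.
Qed.

Lemma below_trans y x u : below y x -> below x u -> below y u.
Proof.
move=> Hyx Hxu; case: (y =P u) => [->|yu]; first exact: below_refl.
apply/negPn/negP => Hn; move: (notbelow_connect Hn) => C.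
case/connectP: C => p P L.
have Hx : x \in y :: p.
  by apply: (below_on_root_path Hyx) => //; apply/(sub_path (@adj_avoiding_tree u)).
have C2 := path_connect_suffix P Hx; rewrite -L in C2.
case: (x =P u) => [xu|/eqP xu]; first by subst; rewrite Hyx in Hn.
by move: Hxu; rewrite /below (negbTE xu) C2.
Qed.

Lemma below_antisym x u : below x u -> below u x -> x = u.
Proof.
move=> Hxu Hux; apply/eqP/negPn/negP => xu.
have [p [P L U]] := connect_uniq_path (tree_connect x r).
have Hu := below_on_root_path Hxu P L; move: Hu; rewrite inE eq_sym (negbTE xu) /= => Hu.
case/splitPr: Hu P U L => p1 p2; rewrite cat_path /= => /and3P [_ _ P2] U L.
have : connect (adj_avoiding x) u r.
  rewrite -L last_cat /=; apply: connect_avoiding => //.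
  by move: U => /= /andP [H _]; move: H; rewrite mem_cat negb_or => /andP [_ H].
by move: Hux; rewrite /below eq_sym (negbTE xu) /= => /negP.
Qed.

Lemma connect_avoiding_prefix z u v p1 p2 : path adjT z (p1 ++ v :: p2) ->
  u \notin z :: rcons p1 v -> connect (adj_avoiding u) z v.
Proof.
rewrite cat_path /= => /and3P [P1 Hv _] U.
have := @connect_avoiding u z (rcons p1 v); rewrite last_rcons; apply => //.
by rewrite rcons_path P1.
Qed.

Lemma below_chain_on_path z u v p1 p2 : path adjT z (p1 ++ u :: p2) ->
  uniq (z :: p1 ++ u :: p2) -> below z v -> z != v -> v \in p2 ->
  last z (p1 ++ u :: p2) = r -> below u v.
Proof.
move=> P U Hzv zv vp2 L; apply/negPn/negP => /notbelow_connect C.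
have Hn : v \notin z :: rcons p1 u.
  apply: (@uniq_cat_notin_l _ _ p2); by rewrite -cat_rcons -cat_cons in U.
have C1 := connect_avoiding_prefix P Hn.
have : connect (adj_avoiding v) z r by apply: connect_trans C1 C.
by move: Hzv; rewrite /below (negbTE zv) /= => /negP.
Qed.

Lemma below_chain z u v : below z u -> below z v -> below u v || below v u.
Proof.
move=> Hu Hv.
case: (z =P u) => [<-|zu]; first by rewrite Hv.
case: (z =P v) => [<-|zv]; first by rewrite Hu orbT.
have [p [P L U]] := connect_uniq_path (tree_connect z r).
have mu := below_on_root_path Hu P L; have mv := below_on_root_path Hv P L.
move: mu mv; rewrite !inE.
have -> : (u == z) = false by apply/eqP => H; apply: zu.
have -> : (v == z) = false by apply/eqP => H; apply: zv.
move=> /= mu mv.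
case: (u =P v) => [->|/eqP uv]; first by rewrite below_refl.
case/splitPr: mu P U L mv => p1 p2 P U L.
rewrite mem_cat inE eq_sym (negbTE uv) /= => /orP [vp1|vp2].
- apply/orP; right.
  case/splitPr: vp1 P U L => q1 q2 P U L.
  rewrite -catA /= in P U L.
  apply: (below_chain_on_path P U Hu (introN eqP zu)) L.
  by rewrite mem_cat mem_head orbT.
- by rewrite (below_chain_on_path P U Hv (introN eqP zv)) .
Qed.

Lemma tree_edge_bridge e u v : e \in ET -> joins ends e u v ->
  ~~ connect (adj ends (ET :\ e)) u v.
Proof.
move=> eT J; apply/negP; rewrite connect_adjC => /connect_uniq_path [p [P L U]].
have [VS [ES [sES cyc]]] := closed_path_cycle noloop P L U (negbT (setD11 e ET)) J.
case: tree => _ _ _ Ac; apply: (Ac VS ES _ _ cyc).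
- by apply/subsetP => x _; apply: HVT.
- by apply: subset_trans sES _; rewrite setD1K.
Qed.

Lemma adj_avoiding_bridge w e : incident ends e w -> subrel (adj_avoiding w) (adj ends (ET :\ e)).
Proof.
move=> I; apply: adj_subset; apply/subsetP => e'; rewrite /avoiding_edges !inE => /andP [eT I'].
by rewrite eT andbT; apply/eqP => E'; subst; rewrite I in I'.
Qed.

Lemma connect_avoiding_bridge w e x y : incident ends e w -> connect (adj_avoiding w) x y ->
  connect (adj ends (ET :\ e)) x y.
Proof. move=> I; apply: connect_sub => a b H; apply: connect1; exact: adj_avoiding_bridge H. Qed.

Lemma tree_edge_below e u v : e \in ET -> joins ends e u v -> below u v || below v u.
Proof.
move=> eT J; apply/negPn/negP; rewrite negb_or => /andP [H1 H2].
have C1 := notbelow_connect H1; have C2 := notbelow_connect H2.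
have /andP [Iu Iv] := joins_incident J.
have := tree_edge_bridge eT J; apply/negP/negPn.
apply: (connect_trans (connect_avoiding_bridge Iv C1)).
by rewrite connect_adjC //; apply: connect_avoiding_bridge Iu C2.
Qed.

Lemma tree_edge_cover e c p w : e \in ET -> joins ends e c p -> below c w -> below w p ->
  w = c \/ w = p.
Proof.
move=> eT J Hcw Hwp.
case: (w =P c) => [|/eqP wc]; first by left.
case: (w =P p) => [|/eqP wp]; first by right.
exfalso.
have Hpw : ~~ below p w by apply/negP => H; move: wp; rewrite (below_antisym Hwp H) eqxx.
have C := notbelow_connect Hpw.
have A : adj_avoiding w c p.
  apply/existsP; exists e; rewrite J inE eT andbT /= /incident.
  by move: (joins_ends J) => /orP[] /andP [/eqP -> /eqP ->]; rewrite negb_or;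
   rewrite !(eq_sym _ w) ?wc ?wp.
have C2 : connect (adj_avoiding w) c r by apply: connect_trans (connect1 A) C.
by move: Hcw; rewrite /below eq_sym (negbTE wc) C2.
Qed.

Lemma parent_edge x : x != r -> exists e p,
  [/\ e \in ET, joins ends e x p, below x p & x != p].
Proof.
move=> xr; have [q [P L U]] := connect_uniq_path (tree_connect x r).
case: q P L U => [/= _ L|y q /= /andP [Hxy P] L U]; first by rewrite L eqxx in xr.
move: Hxy => /existsP [e /andP [eT J]].
have xy := joins_neq (@noloop) J.
exists e, y; split => //.
case/orP: (tree_edge_below eT J) => // Hyx.
exfalso; move: Hyx; rewrite /below eq_sym (negbTE xy) /= => /negP; apply.
rewrite -L; apply: connect_avoiding => //.
by move: U; rewrite inE => /andP [].
Qed.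

Lemma child_on_path y x : below y x -> y != x -> exists e w,
  [/\ e \in ET, joins ends e w x, below y w, below w x & w != x].
Proof.
move=> Hyx yx.
have [P0 [P L U]] := connect_uniq_path (tree_connect y r).
have Hx := below_on_root_path Hyx P L.
move: Hx; rewrite inE eq_sym (negbTE yx) /= => Hx.
case/splitPr: Hx P U L => p1 p2 P U L.
move: (P); rewrite cat_path /= => /and3P [P1 Hwx P2].
set w := last y p1 in Hwx *.
move: (Hwx) => /existsP [e /andP [eT J]].
have xn : x \notin y :: p1.
  exact: (@uniq_cat_notin_l _ (y :: p1) (x :: p2) x U (mem_head _ _)).
have wm : w \in y :: p1 by apply: mem_last.
have wx : w != x by apply/eqP => E'; move: xn; rewrite -E' wm.
have Hwx' : below w x.
  case/orP: (tree_edge_below eT J) => // Hxw; exfalso.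
  have wn : w \notin x :: p2.
    exact: (@uniq_cat_notin_r _ (y :: p1) (x :: p2) w U wm).
  have C : connect (adj_avoiding w) x r.
    rewrite -L last_cat; apply: connect_avoiding => //.
  by move: Hxw; rewrite /below eq_sym (negbTE wx) C.
exists e, w; split => //.
case: (y =P w) => [->|/eqP yw]; first exact: below_refl.
apply/negPn/negP => /notbelow_connect C.
case/connectP: C => Q PQ LQ.
have Hx2 : x \in y :: Q.
  apply: (below_on_root_path Hyx) => //; apply: sub_path PQ; exact: adj_avoiding_tree.
have C1 : connect (adj_avoiding w) y x := path_connect_prefix PQ Hx2.
have C2 : connect (adj_avoiding x) y w by apply: connect_avoiding.
have /andP [Iw Ix] := joins_incident J.
have := tree_edge_bridge eT J; apply/negP/negPn.
apply: (connect_trans _ (connect_avoiding_bridge Iw C1)).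
by rewrite connect_adjC; apply: connect_avoiding_bridge Ix C2.
Qed.

Lemma tree_no_parallel e1 e2 u v : e1 \in ET -> e2 \in ET ->
  joins ends e1 u v -> joins ends e2 u v -> e1 = e2.
Proof.
move=> e1T e2T J1 J2; apply/eqP/negPn/negP => ne.
have := tree_edge_bridge e1T J1; apply/negP/negPn.
apply: connect1; apply/existsP; exists e2; by rewrite J2 !inE eq_sym ne e2T.
Qed.

Lemma parent_edge_unique x e1 p1 e2 p2 : e1 \in ET -> e2 \in ET ->
  joins ends e1 x p1 -> joins ends e2 x p2 -> below x p1 -> below x p2 ->
  x != p1 -> x != p2 -> e1 = e2.
Proof.
move=> e1T e2T J1 J2 H1 H2 n1 n2.
case/orP: (below_chain H1 H2) => H.
- case: (tree_edge_cover e2T J2 H1 H) => E'; first by rewrite E' eqxx in n1.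
  by subst; apply: (tree_no_parallel e1T e2T J1 J2).
- case: (tree_edge_cover e1T J1 H2 H) => E'; first by rewrite E' eqxx in n2.
  by subst; apply: (tree_no_parallel e1T e2T J1 J2).
Qed.

Lemma children_common_below e w e' w' v z : e \in ET -> e' \in ET ->
  joins ends e w v -> joins ends e' w' v -> below w v -> below w' v ->
  w' != v -> below z w -> below z w' -> w = w'.
Proof.
move=> eT e'T J J' H H' n' Hz Hz'.
case/orP: (below_chain Hz Hz') => Hc.
- case: (tree_edge_cover eT J Hc H') => // E'; by rewrite E' eqxx in n'.
- case: (tree_edge_cover e'T J' Hc H) => // E'.
  by move: (joins_neq (@noloop) J); rewrite E' eqxx.
Qed.

Hypothesis rleaf : r \in leaves ends VT ET.
Hypothesis nondeg2 : forall v, v \in VT -> deg ends ET v <> 2.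

Definition Lv := leaves ends VT ET.
Definition leaves_below u := [set z in Lv | below z u].

Lemma deg_ge2 v e1 e2 : e1 \in ET -> e2 \in ET -> incident ends e1 v ->
  incident ends e2 v -> e1 != e2 -> 2 <= deg ends ET v.
Proof.
move=> e1T e2T I1 I2 ne; rewrite /deg.
have <- : #|[set e1; e2]| = 2 by rewrite cards2 ne.
apply: subset_leq_card; apply/subsetP => e; rewrite !inE => /orP [] /eqP ->;
  by apply/andP.
Qed.

Lemma third_edge v e1 e2 : 3 <= deg ends ET v -> exists e,
  [/\ e \in ET, incident ends e v, e != e1 & e != e2].
Proof.
rewrite /deg => H.
set S := [set e in ET | incident ends e v] in H.
have : 0 < #|S :\ e1 :\ e2|.
  move: H; rewrite (cardsD1 e1 S) (cardsD1 e2 (S :\ e1)).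
  by case: (e1 \in S); case: (e2 \in S :\ e1) => /=; lia.
move/card_gt0P => [e]; rewrite !inE => /and4P [n2 n1 eT I].
by exists e.
Qed.

Lemma leaf_edge_unique v e1 e2 : v \in Lv -> e1 \in ET -> e2 \in ET ->
  incident ends e1 v -> incident ends e2 v -> e1 = e2.
Proof.
rewrite /Lv /leaves inE => /andP [_ /eqP d1] e1T e2T I1 I2.
apply/eqP/negPn/negP => ne; have := deg_ge2 e1T e2T I1 I2 ne; by rewrite d1.
Qed.

Lemma child_edge_neq_parent e w v ep p : joins ends e w v -> below w v -> w != v ->
  joins ends ep v p -> below v p -> v != p -> e != ep.
Proof.
move=> J Hwv wv Jp Hvp vp; apply/eqP => E'; subst ep.
case: (joins_ends_eq J Jp) => [[E1 _]|[E2 _]]; first by rewrite E1 eqxx in wv.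
by subst w; move: (below_antisym Hwv Hvp) => E'; rewrite E' eqxx in wv.
Qed.

Lemma internal_deg_ge3 v : v \notin Lv -> v != r -> 3 <= deg ends ET v.
Proof.
move=> vL vr.
have [ep [p [epT Jp _ _]]] := parent_edge vr.
have d1 : 1 <= deg ends ET v.
  rewrite /deg card_gt0; apply/set0Pn; exists ep; rewrite inE epT.
  by case/andP: (joins_incident Jp).
have d2 := nondeg2 (HVT v).
have d3 : deg ends ET v != 1.
  by apply: contraNneq vL => d; rewrite /Lv /leaves inE HVT d.
move: d1 d2 d3; case: (deg ends ET v) => [|[|[|n]]] //.
Qed.

Lemma child_edge v : v \notin Lv -> v != r -> exists e w,
  [/\ e \in ET, joins ends e w v, below w v & w != v].
Proof.
move=> vL vr.
have [ep [p [epT Jp Hvp vp]]] := parent_edge vr.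
have [e [eT I ne _]] := third_edge ep ep (internal_deg_ge3 vL vr).
have [w J] := incident_joins I.
have wv : w != v by rewrite eq_sym; apply: (joins_neq (@noloop) J).
exists e, w; split => //; first by rewrite joinsC.
case/orP: (tree_edge_below eT J) => // Hvw.
by move: ne; rewrite (parent_edge_unique eT epT J Jp Hvw Hvp) ?eqxx // eq_sym.
Qed.

Lemma leaves_below_mono u v : below u v -> leaves_below u \subset leaves_below v.
Proof.
move=> H; apply/subsetP => z; rewrite !inE => /andP [-> Hz] /=.
exact: below_trans Hz H.
Qed.

Lemma root_in_leaves_below u : r \in leaves_below u -> u = r.
Proof. rewrite inE => /andP [_ H]; exact: below_antisym (below_root u) H. Qed.

Lemma leaves_below_nonempty u : exists z, z \in leaves_below u.
Proof.
have [n] := ubnP #|[set y | below y u]|; elim: n u => // n IH u Hn.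
case: (boolP (u \in Lv)) => uL; first by exists u; rewrite inE uL below_refl.
case: (u =P r) => [->|/eqP ur]; first by exists r; rewrite inE rleaf below_refl.
have [e [w [eT J Hwu wu]]] := child_edge uL ur.
have [z Hz] : exists z, z \in leaves_below w.
  apply: IH; rewrite ltnS in Hn; apply: (leq_trans _ Hn); apply: proper_card.
  apply/properP; split.
    by apply/subsetP => y; rewrite !inE => H; apply: below_trans H Hwu.
  exists u; rewrite !inE ?below_refl //; apply/negP => H.
  by move: wu; rewrite (below_antisym Hwu H) eqxx.
by exists z; apply: (subsetP (leaves_below_mono Hwu)).
Qed.

Lemma leaves_below_inj_below u v : below u v -> leaves_below u = leaves_below v -> u = v.
Proof.
move=> Huv Duv; case: (u =P v) => // /eqP uv; exfalso.
have [e [w [eT J Huw Hwv wv]]] := child_on_path Huv uv.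
case: (v =P r) => [vr|/eqP vr].
  have : r \in leaves_below u by rewrite Duv inE rleaf vr below_refl.
  by move/root_in_leaves_below => ur; move: uv; rewrite ur vr eqxx.
have [ep [p [epT Jp Hvp vp]]] := parent_edge vr.
have nep := child_edge_neq_parent J Hwv wv Jp Hvp vp.
case: (boolP (v \in Lv)) => vL.
  have /andP [_ I1] := joins_incident J; have /andP [I2 _] := joins_incident Jp.
  by move: nep; rewrite (leaf_edge_unique vL eT epT I1 I2) eqxx.
have [e3 [e3T I3 n31 n32]] := third_edge e ep (internal_deg_ge3 vL vr).
have [w' J3] := incident_joins I3.
have w'v : w' != v by rewrite eq_sym; apply: (joins_neq (@noloop) J3).
have Hw'v : below w' v.
  case/orP: (tree_edge_below e3T J3) => // Hvw'.
  by move: n32; rewrite (parent_edge_unique e3T epT J3 Jp Hvw' Hvp) ?eqxx // eq_sym.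
rewrite joinsC in J3.
have [z' Hz'] := leaves_below_nonempty w'.
have : z' \in leaves_below v by apply: (subsetP (leaves_below_mono Hw'v)).
rewrite -Duv inE => /andP [_ Hz'u].
move: Hz'; rewrite inE => /andP [_ Hz'w'].
have := children_common_below eT e3T J J3 Hwv Hw'v w'v (below_trans Hz'u Huw) Hz'w'.
move=> E'; subst w'.
by move: n31; rewrite (tree_no_parallel e3T eT J3 J) eqxx.
Qed.

Lemma leaves_below_inj u v : leaves_below u = leaves_below v -> u = v.
Proof.
move=> Duv; have [z Hz] := leaves_below_nonempty u.
have Hz' : z \in leaves_below v by rewrite -Duv.
move: Hz Hz'; rewrite !inE => /andP [_ H1] /andP [_ H2].
case/orP: (below_chain H1 H2) => H; first exact: leaves_below_inj_below.
by symmetry; apply: leaves_below_inj_below.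
Qed.

Lemma leaves_below_subset u v : leaves_below u \subset leaves_below v -> below u v.
Proof.
move=> S; have [z Hz] := leaves_below_nonempty u.
have Hz' := subsetP S z Hz.
move: (Hz) (Hz'); rewrite !inE => /andP [_ H1] /andP [_ H2].
case/orP: (below_chain H1 H2) => // H.
suff -> : u = v by apply: below_refl.
by apply: leaves_below_inj; apply/eqP; rewrite eqEsubset S /=; apply: leaves_below_mono.
Qed.

Lemma leaves_below_leaf z : z \in Lv -> z != r -> leaves_below z = [set z].
Proof.
move=> zL zr; apply/setP => y; rewrite !inE.
apply/andP/eqP => [[yL Hyz]|->].
  2: by split; [move: zL; rewrite /Lv /leaves inE | exact: below_refl].
apply/eqP/negPn/negP => yz.
have [e [w [eT J Hyw Hwz wz]]] := child_on_path Hyz yz.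
have [ep [p [epT Jp Hzp zp]]] := parent_edge zr.
have nep := child_edge_neq_parent J Hwz wz Jp Hzp zp.
have /andP [_ I1] := joins_incident J; have /andP [I2 _] := joins_incident Jp.
by move: nep; rewrite (leaf_edge_unique zL eT epT I1 I2) eqxx.
Qed.

Definition sbelow x u := below x u && (x != u).
Definition induced_edges (S : {set V}) :=
  [set e in ET | ((ends e).1 \in S) && ((ends e).2 \in S)].

Lemma induced_edges_sub S : induced_edges S \subset ET.
Proof. by apply/subsetP => e; rewrite inE => /andP []. Qed.

Lemma induced_subgraph S : is_subgraph ends S (induced_edges S).
Proof. by move=> e; rewrite inE => /andP []. Qed.

Lemma induced_connected_upward (S : {set V}) m : m \in S ->
  (forall z, z \in S -> z != m -> exists e p,
     [/\ e \in ET, joins ends e z p, sbelow z p & p \in S]) ->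
  connected ends S (induced_edges S).
Proof.
move=> mS H.
have Hc : forall z, z \in S -> connect (adj ends (induced_edges S)) z m.
  move=> z; have [n] := ubnP #|[set y | sbelow z y]|; elim: n z => // n IH z Hn zS.
  case: (z =P m) => [->|/eqP zm]; first exact: connect0.
  have [e [p [eT J Hzp pS]]] := H z zS zm.
  apply: (connect_trans (connect1 _)); last first.
    apply: IH pS; rewrite ltnS in Hn; apply: (leq_trans _ Hn); apply: proper_card.
    apply/properP; split.
      apply/subsetP => y; rewrite !inE /sbelow => /andP [H1 H2].
      move: Hzp => /andP [H3 H4].
      rewrite (below_trans H3 H1) /=; apply/eqP => E'; subst y.
      by move: H4; rewrite (below_antisym H3 H1) eqxx.
    exists p; rewrite !inE /sbelow ?below_refl ?eqxx ?andbF //.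
  apply/existsP; exists e; rewrite J andbT inE eT /=.
  by move: (joins_ends J) => /orP[] /andP [/eqP -> /eqP ->]; rewrite zS pS.
move=> x y xS yS; apply: connect_trans (Hc x xS) _.
by rewrite connect_adjC; apply: Hc.
Qed.

(** * Leaf sets cannot interleave around the cycle *)

Variables (VC : {set V}) (EC : {set E}) (l : E -> R) (n : nat)
  (f : 'I_n.+1 -> V) (g : 'I_n.+1 -> E).
Hypothesis Hn : 2 <= n.
Hypothesis finj : injective f.
Hypothesis ginj : injective g.
Hypothesis Hfg : forall i, joins ends (g i) (f i) (f (ordS i)).
Hypothesis HVC : VC = [set f i | i in 'I_n.+1].
Hypothesis HEC : EC = [set g i | i in 'I_n.+1].
Hypothesis HVCL : VC = Lv.
Hypothesis Hr : r = f ord_max.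
Hypothesis lpos : forall e, Rlt R0 (l e).
Hypothesis sct : shortcut_tree ends l VT ET VC EC.

Definition cyc_index x : 'I_n.+1 := odflt ord0 [pick i | f i == x].

Lemma cyc_indexK x : x \in VC -> f (cyc_index x) = x.
Proof.
rewrite HVC => /imsetP [i _ ->]; rewrite /cyc_index; case: pickP => [j /eqP //|/(_ i)].
by rewrite eqxx.
Qed.

Lemma cyc_index_f i : cyc_index (f i) = i.
Proof. by apply: finj; apply: cyc_indexK; rewrite HVC imset_f. Qed.

Lemma f_leaf i : f i \in Lv.
Proof. by rewrite -HVCL HVC imset_f. Qed.

Lemma leaf_f z : z \in Lv -> f (cyc_index z) = z.
Proof. by rewrite -HVCL; apply: cyc_indexK. Qed.

Lemma cycle_subgraph_interleaved (VS : {set V}) (ES : {set E}) (i1 j1 i2 j2 : 'I_n.+1) :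
  ES \subset EC ->
  is_subgraph ends VS ES -> connected ends VS ES ->
  i1 < j1 -> j1 < i2 -> i2 < j2 -> f i1 \in VS -> f i2 \in VS ->
  (f j1 \in VS) || (f j2 \in VS).
Proof.
move=> sE sg cn h1 h2 h3 a1 a2; apply/negPn/negP; rewrite negb_or => /andP [n1 n2].
(* The cycle vertices strictly between j1 and j2 are closed under the edges of ES. *)
pose P := [pred x | (j1 < cyc_index x) && (cyc_index x < j2)].
have key : forall m, f m \in VS -> f (ordS m) \in VS -> P (f m) = P (f (ordS m)).
  move=> m a b; rewrite /P /= !cyc_index_f.
  have m1 : m != j1 by apply: contraNneq n1 => <-.
  have m2 : m != j2 by apply: contraNneq n2 => <-.
  have s1 : ordS m != j1 by apply: contraNneq n1 => <-.
  have s2 : ordS m != j2 by apply: contraNneq n2 => <-.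
  move: m1 m2 s1 s2; rewrite -!val_eqE /=.
  have := ltn_ord m; have := ltn_ord j2; rewrite !ltnS.
  move=> Hj2 Hm' m1 m2 s1 s2.
  case: (ltnP m n) => Hm.
    rewrite modn_small in s1 s2 *; last by rewrite ltnS.
    by apply/idP/idP; lia.
  have Em : nat_of_ord m = n by lia.
  move: s1 s2 m1 m2; rewrite Em modnn => s1 s2 m1 m2.
  by apply/idP/idP; lia.
have cl : closed (adj ends ES) P.
  move=> x y /existsP [e /andP [eES J]].
  have /andP [xS yS] : (x \in VS) && (y \in VS).
    by have := sg e eES; move: (joins_ends J) => /orP[] /andP [/eqP -> /eqP ->] /andP [-> ->].
  have : e \in EC by apply: (subsetP sE).
  rewrite HEC => /imsetP [m _ Em]; subst e.
  case: (joins_ends_eq J (Hfg m)) => [[Ex Ey]|[Ex Ey]]; subst x y.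
    by apply: key.
  by symmetry; apply: key.
have := closed_connect cl (cn _ _ a1 a2).
rewrite /P !inE !cyc_index_f; lia.
Qed.

Lemma no_interleaving (A VS1 VS2 : {set V}) (ES1 ES2 : {set E}) (i1 j1 i2 j2 : 'I_n.+1) :
  conn_sub_cont ends VT ET A VS1 ES1 ->
  conn_sub_cont ends VT ET (Lv :\: A) VS2 ES2 ->
  [disjoint ES1 & ES2] -> i1 < j1 -> j1 < i2 -> i2 < j2 ->
  f i1 \in A -> f i2 \in A -> f j1 \notin A -> f j2 \notin A ->
  A \subset Lv -> False.
Proof.
move=> C1 C2 dis h1 h2 h3 a1 a2 b1 b2 AL.
case: sct => _ _ S3 S4.
have PA : A \proper Lv.
  by apply/properP; split => //; exists (f j1) => //; exact: f_leaf.
have PA' : Lv :\: A \proper Lv.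
  apply/properP; split; first exact: subsetDl.
  by exists (f i1); [exact: f_leaf | rewrite inE a1].
have [W1 [F1 [C1' le1]]] := S4 A PA VS1 ES1 C1.
have [W2 [F2 [C2' le2]]] := S4 _ PA' VS2 ES2 C2.
have [c [cW1 cW2]] : exists c, c \in W1 /\ c \in W2.
  case: (C1') => _ sF1 sg1 cn1 AW1; case: (C2') => _ _ _ _ AW2.
  have := cycle_subgraph_interleaved sF1 sg1 cn1 h1 h2 h3 (subsetP AW1 _ a1) (subsetP AW1 _ a2).
  case/orP => H; [exists (f j1) | exists (f j2)]; split => //;
    apply: (subsetP AW2); by rewrite inE ?b1 ?b2 f_leaf.
have U : conn_sub_cont ends VC EC Lv (W1 :|: W2) (F1 :|: F2).
  by apply: conn_sub_cont_setU C1' C2' cW1 cW2 _; rewrite -subDset.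
have lnn e : Rle R0 (l e) by apply: Rlt_le.
case: C1 => _ sE1 _ _ _; case: C2 => _ sE2 _ _ _.
have := S3 _ _ U; have := len_setU lnn F1 F2; have := len_disjoint lnn dis sE1 sE2.
lra.
Qed.

Definition subtree u := [set x | below x u].

Lemma parent_in_subtree z u e p : below z u -> z != u -> e \in ET ->
  joins ends e z p -> below z p -> z != p -> below p u.
Proof.
move=> Hzu zu eT J Hzp zp.
case/orP: (below_chain Hzp Hzu) => // Hup.
case: (tree_edge_cover eT J Hzu Hup) => E'; first by rewrite E' eqxx in zu.
by rewrite E' below_refl.
Qed.

Lemma subtree_parent z w : z \in subtree w -> z != w -> exists e p,
  [/\ e \in ET, joins ends e z p, sbelow z p & p \in subtree w].
Proof.
rewrite inE => Hzw zw.
have zr : z != r.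
  apply: contraNneq zw => E'; subst z.
  by rewrite (below_antisym (below_root w) Hzw) eqxx.
have [e [p [eT J Hzp zp]]] := parent_edge zr.
exists e, p; split => //; first by rewrite /sbelow Hzp zp.
by rewrite inE (parent_in_subtree Hzw zw eT J Hzp zp).
Qed.

Lemma subtree_connected u : connected ends (subtree u) (induced_edges (subtree u)).
Proof.
apply: (induced_connected_upward (m := u)); first by rewrite inE below_refl.
by move=> z zS zu; apply: subtree_parent zS zu.
Qed.

Lemma cosubtree_connected (S : {set V}) :
  (forall x y, below x y -> y \in S -> x \in S) -> r \notin S ->
  connected ends (~: S) (induced_edges (~: S)).
Proof.
move=> dc rS; apply: (induced_connected_upward (m := r)); first by rewrite inE.
move=> z; rewrite inE => zS zr.
have [e [p [eT J Hzp zp]]] := parent_edge zr.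
exists e, p; split => //; first by rewrite /sbelow Hzp zp.
by rewrite inE; apply: contra zS; apply: dc.
Qed.

Lemma induced_edges_disjoint (S1 S2 : {set V}) v :
  (forall x, x \in S1 -> x \in S2 -> x = v) -> [disjoint induced_edges S1 & induced_edges S2].
Proof.
move=> H; rewrite -setI_eq0; apply/eqP/setP => e; rewrite !inE.
apply/negP => /andP [/and3P [_ a1 b1] /and3P [_ a2 b2]].
apply: (@noloop e); by rewrite (H _ a1 a2) (H _ b1 b2).
Qed.

Lemma induced_conn_sub_cont (S A : {set V}) : A \subset S -> connected ends S (induced_edges S) ->
  conn_sub_cont ends VT ET A S (induced_edges S).
Proof.
move=> AS C; split => //; [by apply/subsetP => x _; apply: HVT | exact: induced_edges_sub |
  exact: induced_subgraph].
Qed.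

Lemma root_notin_subtree w : w != r -> r \notin subtree w.
Proof.
by move=> wr; rewrite inE; apply/negP => H; rewrite (below_antisym (below_root w) H) eqxx in wr.
Qed.

Lemma leaves_below_sub u : leaves_below u \subset Lv.
Proof. by apply/subsetP => x; rewrite inE => /andP []. Qed.

Lemma leaves_below_contiguous u (i j k : 'I_n.+1) : u != r -> i < j -> j < k ->
  f i \in leaves_below u -> f k \in leaves_below u -> f j \in leaves_below u.
Proof.
move=> ur h1 h2 fi fk; apply/negPn/negP => fj.
have kn : k < (@ord_max n).
  rewrite /=; have := ltn_ord k; rewrite ltnS leq_eqVlt => /orP [/eqP Ek|//].
  have : f k = r by rewrite Hr; congr f; apply: val_inj.
  by move=> E'; move: fk; rewrite E' => /root_in_leaves_below E2; rewrite E2 eqxx in ur.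
have dc : forall x y, below x y -> y \in subtree u -> x \in subtree u.
  by move=> x y Hxy; rewrite !inE; apply: below_trans.
apply: (@no_interleaving (leaves_below u) (subtree u) (~: subtree u) _ _ i j k ord_max
  (induced_conn_sub_cont _ (@subtree_connected u))
  (induced_conn_sub_cont _ (@cosubtree_connected _ dc (root_notin_subtree ur)))
  (induced_edges_disjoint (v := r) _) h1 h2 kn fi fk fj).
- by apply/subsetP => x; rewrite !inE => /andP [].
- apply/subsetP => x; rewrite in_setD in_setC => /andP [H xL]; apply: contra H => H'.
  by rewrite /leaves_below in_set xL /=; rewrite /subtree in_set in H'.
- by move=> x; rewrite !inE => ->.
- by rewrite -Hr; apply/negP => /root_in_leaves_below E'; rewrite E' eqxx in ur.
- exact: leaves_below_sub.
Qed.

Lemma child_neq_root w v e : joins ends e w v -> below w v -> w != v -> w != r.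
Proof.
move=> _ Hwv wv; apply: contraNneq wv => E'; subst w.
by rewrite (below_antisym (below_root v) Hwv).
Qed.

Lemma leaves_below_index_lt (i : 'I_n.+1) u : f i \in leaves_below u -> u != r -> i < n.
Proof.
move=> H ur; have := ltn_ord i; rewrite ltnS leq_eqVlt => /orP [/eqP Ei|//].
have : f i = r by rewrite Hr; congr f; apply: val_inj.
by move=> E'; move: H; rewrite E' => /root_in_leaves_below E2; rewrite E2 eqxx in ur.
Qed.

Lemma children_subtrees_connected v e1 w1 e3 w3 : e1 \in ET -> e3 \in ET ->
  joins ends e1 w1 v -> joins ends e3 w3 v -> below w1 v -> below w3 v ->
  w1 != v -> w3 != v ->
  connected ends (v |: (subtree w1 :|: subtree w3))
    (induced_edges (v |: (subtree w1 :|: subtree w3))).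
Proof.
move=> e1T e3T J1 J3 H1 H3 n1 n3.
have up e w z : e \in ET -> joins ends e w v -> below w v -> w != v -> below z w ->
    exists e' p, [/\ e' \in ET, joins ends e' z p, sbelow z p & (p == v) || below p w].
  move=> eT J Hw nw zw; case: (z =P w) => [->|/eqP zw'].
    by exists e, v; split => //; [rewrite /sbelow Hw nw | rewrite eqxx].
  have zS : z \in subtree w by rewrite inE.
  have [e' [p [e'T J' Hzp]]] := subtree_parent zS zw'; rewrite inE => pS.
  by exists e', p; split => //; rewrite pS orbT.
apply: (induced_connected_upward (m := v)); first by rewrite !inE eqxx.
move=> z; rewrite !inE => /orP [->//|/orP [] zw] _.
- have [e [p [eT J Hzp pS]]] := up _ _ _ e1T J1 H1 n1 zw.
  by exists e, p; split => //; rewrite !inE; case/orP: pS => ->; rewrite ?orbT.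
- have [e [p [eT J Hzp pS]]] := up _ _ _ e3T J3 H3 n3 zw.
  by exists e, p; split => //; rewrite !inE; case/orP: pS => ->; rewrite ?orbT.
Qed.

Lemma three_children_absurd v e1 w1 e2 w2 e3 w3 (i1 i2 i3 : 'I_n.+1) : v != r ->
  e1 \in ET -> e2 \in ET -> e3 \in ET ->
  joins ends e1 w1 v -> joins ends e2 w2 v -> joins ends e3 w3 v ->
  below w1 v -> below w2 v -> below w3 v -> w1 != v -> w2 != v -> w3 != v ->
  w1 != w2 -> w2 != w3 ->
  f i1 \in leaves_below w1 -> f i2 \in leaves_below w2 -> f i3 \in leaves_below w3 ->
  i1 < i2 -> i2 < i3 -> False.
Proof.
move=> vr e1T e2T e3T J1 J2 J3 H1 H2 H3 n1 n2 n3 d12 d23 z1 z2 z3 h1 h2.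
set S13 := subtree w1 :|: subtree w3.
set A := leaves_below w1 :|: leaves_below w3.
have r1 := child_neq_root J1 H1 n1; have r3 := child_neq_root J3 H3 n3.
have C1 := children_subtrees_connected e1T e3T J1 J3 H1 H3 n1 n3.
have down x y : below x y -> y \in S13 -> x \in S13.
  move=> Hxy; rewrite !inE => /orP [] H; by rewrite (below_trans Hxy H) ?orbT.
have rS : r \notin S13.
  by rewrite in_setU negb_or (root_notin_subtree r1) (root_notin_subtree r3).
have C2 := @cosubtree_connected S13 down rS.
have z2A : f i2 \notin A.
  rewrite !inE negb_or; apply/andP; split; apply/negP => /andP [_ H].
    move: z2; rewrite inE => /andP [_ H'].
    by move: d12; rewrite (children_common_below e1T e2T J1 J2 H1 H2 n2 H H') eqxx.
  move: z2; rewrite inE => /andP [_ H'].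
  by move: d23; rewrite (children_common_below e2T e3T J2 J3 H2 H3 n3 H' H) eqxx.
apply: (@no_interleaving A _ (~: S13) _ _ i1 i2 i3 ord_max
  (induced_conn_sub_cont _ C1) (induced_conn_sub_cont _ C2)
  (induced_edges_disjoint (v := v) _) h1 h2 (leaves_below_index_lt z3 r3)).
- apply/subsetP => x; rewrite !inE => /orP [] /andP [_ H]; by rewrite H ?orbT.
- apply/subsetP => x; rewrite in_setD => /andP [H xL]; rewrite in_setC.
  apply: contra H; rewrite /S13 /A !in_setU /subtree /leaves_below !in_set.
  move: xL; rewrite /Lv /leaves in_set => -> /=.
  by case/orP => ->; rewrite ?orbT.
- by move=> x; rewrite !inE => /orP [/eqP ->//|H] /negP.
- by rewrite inE z1.
- by rewrite inE z3 orbT.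
- exact: z2A.
- rewrite -Hr in_setU negb_or; apply/andP; split; apply/negP => /root_in_leaves_below E0.
    by rewrite E0 eqxx in r1.
  by rewrite E0 eqxx in r3.
- by rewrite subUset !leaves_below_sub.
Qed.

Lemma incident_edge_notin v (s : seq E) : size s < deg ends ET v ->
  exists e, [/\ e \in ET, incident ends e v & e \notin s].
Proof.
rewrite /deg => H.
case: (boolP ([set e in ET | incident ends e v] \subset [set x in s])) => S.
  have H' := subset_leq_card S.
  have H3 : #|[set x in s]| <= size s by rewrite cardsE card_size.
  have H2 := leq_trans H' H3.
  by move: (leq_ltn_trans H2 H); rewrite ltnn.
move: S => /subsetPn [e]; rewrite !inE => /andP [eT I] es.
by exists e.
Qed.

Lemma child_edge_other v ep p e : joins ends ep v p -> below v p -> v != p ->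
  ep \in ET -> e \in ET -> incident ends e v -> e != ep ->
  exists w, [/\ joins ends e w v, below w v & w != v].
Proof.
move=> Jp Hvp vp epT eT I ne.
have [w J] := incident_joins I.
have wv : w != v by rewrite eq_sym; apply: (joins_neq (@noloop) J).
exists w; split => //; first by rewrite joinsC.
case/orP: (tree_edge_below eT J) => // Hvw.
by move: ne; rewrite (parent_edge_unique eT epT J Jp Hvw Hvp) ?eqxx // eq_sym.
Qed.

Lemma children_neq v e1 w1 e2 w2 : e1 \in ET -> e2 \in ET ->
  joins ends e1 w1 v -> joins ends e2 w2 v -> e1 != e2 -> w1 != w2.
Proof.
move=> e1T e2T J1 J2; apply: contraNneq => E0; subst w2.
by rewrite (tree_no_parallel e1T e2T J1 J2).
Qed.

Lemma leaves_below_index u : exists i : 'I_n.+1, f i \in leaves_below u.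
Proof.
have [z Hz] := leaves_below_nonempty u; exists (cyc_index z).
by rewrite leaf_f //; move: Hz; rewrite inE => /andP [].
Qed.

Lemma children_leaf_index_neq v ea wa eb wb (ia ib : 'I_n.+1) : ea \in ET -> eb \in ET ->
  joins ends ea wa v -> joins ends eb wb v -> below wa v -> below wb v -> wb != v ->
  wa != wb -> f ia \in leaves_below wa -> f ib \in leaves_below wb -> (ia : nat) <> ib.
Proof.
move=> eaT ebT Ja Jb Ha Hb nb dab Za Zb /ord_inj Eab; subst ib.
move: Za Zb; rewrite !inE => /andP [_ Ha'] /andP [_ Hb'].
by move: dab; rewrite (children_common_below eaT ebT Ja Jb Ha Hb nb Ha' Hb') eqxx.
Qed.

Lemma internal_deg3 v : v \notin Lv -> v != r -> deg ends ET v = 3.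
Proof.
move=> vL vr; have d3 := internal_deg_ge3 vL vr.
case: (ltngtP (deg ends ET v) 3) => // H; first by move: (leq_ltn_trans d3 H); rewrite ltnn.
have [ep [p [epT Jp Hvp vp]]] := parent_edge vr.
have hs1 : size [:: ep] < deg ends ET v by apply: ltn_trans H.
have [e1 [e1T I1 n1]] := @incident_edge_notin v [:: ep] hs1.
have hs2 : size [:: ep; e1] < deg ends ET v by apply: ltn_trans H.
have [e2 [e2T I2 n2]] := @incident_edge_notin v [:: ep; e1] hs2.
have [e3 [e3T I3 n3]] := @incident_edge_notin v [:: ep; e1; e2] H.
move: n1 n2 n3; rewrite !inE !negb_or => n1 /andP [n2 n21] /and3P [n3 n31 n32].
have [w1 [J1 H1 m1]] := child_edge_other Jp Hvp vp epT e1T I1 n1.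
have [w2 [J2 H2 m2]] := child_edge_other Jp Hvp vp epT e2T I2 n2.
have [w3 [J3 H3 m3]] := child_edge_other Jp Hvp vp epT e3T I3 n3.
have d21 := children_neq e2T e1T J2 J1 n21; have d12 : w1 != w2 by rewrite eq_sym.
have d31 := children_neq e3T e1T J3 J1 n31; have d13 : w1 != w3 by rewrite eq_sym.
have d32 := children_neq e3T e2T J3 J2 n32; have d23 : w2 != w3 by rewrite eq_sym.
have [i1 Z1] := leaves_below_index w1.
have [i2 Z2] := leaves_below_index w2.
have [i3 Z3] := leaves_below_index w3.
have ne12 := children_leaf_index_neq e1T e2T J1 J2 H1 H2 m2 d12 Z1 Z2.
have ne13 := children_leaf_index_neq e1T e3T J1 J3 H1 H3 m3 d13 Z1 Z3.
have ne23 := children_leaf_index_neq e2T e3T J2 J3 H2 H3 m3 d23 Z2 Z3.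
exfalso.
case: (ltn_total3 ne12 ne13 ne23)
  => [[h12 h23]|[[h13 h32]|[[h21 h13]|[[h23 h31]|[[h31 h12]|[h32 h21]]]]]].
- exact: (three_children_absurd vr e1T e2T e3T J1 J2 J3 H1 H2 H3 m1 m2 m3 d12 d23 Z1 Z2 Z3 h12 h23).
- exact: (three_children_absurd vr e1T e3T e2T J1 J3 J2 H1 H3 H2 m1 m3 m2 d13 d32 Z1 Z3 Z2 h13 h32).
- exact: (three_children_absurd vr e2T e1T e3T J2 J1 J3 H2 H1 H3 m2 m1 m3 d21 d13 Z2 Z1 Z3 h21 h13).
- exact: (three_children_absurd vr e2T e3T e1T J2 J3 J1 H2 H3 H1 m2 m3 m1 d23 d31 Z2 Z3 Z1 h23 h31).
- exact: (three_children_absurd vr e3T e1T e2T J3 J1 J2 H3 H1 H2 m3 m1 m2 d31 d12 Z3 Z1 Z2 h31 h12).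
- exact: (three_children_absurd vr e3T e2T e1T J3 J2 J1 H3 H2 H1 m3 m2 m1 d32 d21 Z3 Z2 Z1 h32 h21).
Qed.

(** * The leaves below a vertex form an interval of the cycle *)

Definition hi u : nat := \max_(i : 'I_n.+1 | f i \in leaves_below u) i.
(* A minimum written as a maximum, since [nat] has no top element. *)
Definition lo u : nat := n - \max_(i : 'I_n.+1 | f i \in leaves_below u) (n - i).

Lemma leaves_below_card u : 0 < #|[pred i : 'I_n.+1 | f i \in leaves_below u]|.
Proof. by have [i Hi] := leaves_below_index u; apply/card_gt0P; exists i. Qed.

Lemma hi_witness u : exists2 i : 'I_n.+1, f i \in leaves_below u & hi u = i.
Proof.
have [i Pi Ei] := eq_bigmax_cond (fun i : 'I_n.+1 => nat_of_ord i) (leaves_below_card u).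
by exists i => //; rewrite /hi; exact: Ei.
Qed.

Lemma lo_witness u : exists2 i : 'I_n.+1, f i \in leaves_below u & lo u = i.
Proof.
have [i Pi Ei] := eq_bigmax_cond (fun i : 'I_n.+1 => n - i) (leaves_below_card u).
exists i => //; rewrite /lo.
have -> : \max_(i0 : 'I_n.+1 | f i0 \in leaves_below u) (n - i0) = n - i by exact: Ei.
have := ltn_ord i; rewrite ltnS => ?; lia.
Qed.

Lemma leaves_below_interval u (i : 'I_n.+1) : f i \in leaves_below u -> lo u <= i <= hi u.
Proof.
move=> H; apply/andP; split.
  rewrite /lo.
  have Hm : n - i <= \max_(j : 'I_n.+1 | f j \in leaves_below u) (n - j)
    := @leq_bigmax_cond _ (fun j : 'I_n.+1 => f j \in leaves_below u)
         (fun j : 'I_n.+1 => n - j) i H.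
  move: Hm; set M := \max_(j : 'I_n.+1 | f j \in leaves_below u) (n - j).
  have := ltn_ord i; rewrite ltnS => ? ?; lia.
exact: (@leq_bigmax_cond _ (fun j : 'I_n.+1 => f j \in leaves_below u)
  (fun j : 'I_n.+1 => nat_of_ord j) i H).
Qed.

Lemma leaves_below_root : leaves_below r = Lv.
Proof. by apply/setP => z; rewrite inE below_root andbT. Qed.

Lemma mem_interval_leaves_below u (i : 'I_n.+1) : (lo u <= i <= hi u) = (f i \in leaves_below u).
Proof.
apply/idP/idP; last exact: leaves_below_interval.
case/andP => h1 h2.
case: (u =P r) => [->|/eqP ur]; first by rewrite leaves_below_root f_leaf.
have [j1 P1 E1] := lo_witness u; have [j2 P2 E2] := hi_witness u.
rewrite E1 leq_eqVlt in h1; rewrite E2 leq_eqVlt in h2.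
case/orP: h1 => [/eqP Eq|h1]; first by rewrite (_ : i = j1) //; apply: val_inj.
case/orP: h2 => [/eqP Eq|h2]; first by rewrite (_ : i = j2) //; apply: val_inj.
exact: leaves_below_contiguous ur h1 h2 P1 P2.
Qed.

Lemma lo_le_hi u : lo u <= hi u.
Proof.
by have [i Pi _] := lo_witness u; case/andP: (leaves_below_interval Pi); apply: leq_trans.
Qed.

Lemma hi_le_n u : hi u <= n.
Proof. by have [i _ ->] := hi_witness u; rewrite -ltnS. Qed.

Lemma interval_subset u v : lo v <= lo u -> hi u <= hi v -> leaves_below u \subset leaves_below v.
Proof.
move=> h1 h2; apply/subsetP => z Hz.
have zL : z \in Lv by move: Hz; rewrite inE => /andP [].
rewrite -(leaf_f zL) -mem_interval_leaves_below.
rewrite -(leaf_f zL) -mem_interval_leaves_below in Hz.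
case/andP: Hz => ? ?; apply/andP; split; [exact: leq_trans h1 _ | exact: leq_trans h2].
Qed.

Lemma below_interval u v : below u v -> lo v <= lo u /\ hi u <= hi v.
Proof.
move=> H; have S := leaves_below_mono H.
have [i Pi Ei] := lo_witness u; have [j Pj Ej] := hi_witness u.
have := leaves_below_interval (subsetP S _ Pi); have := leaves_below_interval (subsetP S _ Pj).
rewrite Ei Ej => /andP [_ ?] /andP [? _]; by split.
Qed.

Lemma interval_below u v : lo v <= lo u -> hi u <= hi v -> below u v.
Proof. by move=> h1 h2; apply: leaves_below_subset; apply: interval_subset. Qed.

Lemma interval_inj u v : lo u = lo v -> hi u = hi v -> u = v.
Proof.
move=> h1 h2; apply: leaves_below_inj; apply/eqP; rewrite eqEsubset.
by rewrite !interval_subset // ?h1 ?h2.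
Qed.

Lemma leaf_interval z : z \in Lv -> z != r -> lo z = cyc_index z /\ hi z = cyc_index z.
Proof.
move=> zL zr; have DE := leaves_below_leaf zL zr.
have [i Pi Ei] := lo_witness z; have [j Pj Ej] := hi_witness z.
move: Pi Pj; rewrite DE !inE => /eqP Pi /eqP Pj.
by rewrite Ei Ej; split; [rewrite -Pi cyc_index_f | rewrite -Pj cyc_index_f].
Qed.

Lemma root_interval : lo r = 0 /\ hi r = n.
Proof.
have h0 : f ord0 \in leaves_below r by rewrite leaves_below_root f_leaf.
have hn : f ord_max \in leaves_below r by rewrite leaves_below_root f_leaf.
have := leaves_below_interval h0; have := leaves_below_interval hn; have := hi_le_n r.
move=> H1 /andP [h1 h2] /andP [h3 h4]; simpl in h1, h2, h3, h4; split; lia.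
Qed.

Lemma root_child_lo c e : e \in ET -> joins ends e c r -> c != r -> lo c = 0.
Proof.
move=> eT J cr.
have f0r : f ord0 != r.
  rewrite Hr; apply/eqP => /finj /(congr1 val) /= E0; move: Hn; rewrite -E0; done.
have [e' [w [e'T J' H1 H2 wr]]] := child_on_path (below_root (f ord0)) f0r.
have /andP [_ I1] := joins_incident J; have /andP [_ I2] := joins_incident J'.
have E' := leaf_edge_unique rleaf eT e'T I1 I2; subst e'.
have J2 : joins ends e r c by rewrite joinsC.
have J3 : joins ends e r w by rewrite joinsC.
have Ew := joins_same_end J2 J3; subst w.
have : f ord0 \in leaves_below c by rewrite inE f_leaf H1.
move/leaves_below_interval => /andP [h _]; apply/eqP; rewrite -leqn0; exact: h.
Qed.

(** * A plane drawing of T ∪ C *)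

Local Open Scope R_scope.

Hypothesis HEall : forall e, (e \in ET) || (e \in EC).

Definition pos u : R * R := (INR (lo u), INR (hi u)).
(* Only the two cycle edges at r are curved, bulging away from the tree. *)
Definition bend e : R :=
  if e == g ord_max then (-1) else if e == g (inord n.-1) then 1 else 0.
Definition arc e (t : R) : R * R :=
  (((1 - t) * (pos (ends e).1).1 + t * (pos (ends e).2).1 + bend e * (t * (1 - t))),
   ((1 - t) * (pos (ends e).1).2 + t * (pos (ends e).2).2 + bend e * (t * (1 - t)))).

Lemma cycle_edge_notin_tree i : g i \notin ET.
Proof.
case: sct => _ H _ _; apply/negP => gi.
have : g i \in ET :&: EC by rewrite inE gi HEC imset_f.
by rewrite H inE.
Qed.

Lemma bend_tree e : e \in ET -> bend e = 0.
Proof.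
move=> eT; rewrite /bend; case: eqP => [E'|_].
  by move: eT; rewrite E' (negbTE (cycle_edge_notin_tree _)).
case: eqP => [E'|//]; by move: eT; rewrite E' (negbTE (cycle_edge_notin_tree _)).
Qed.

Lemma inord_predn : nat_of_ord (inord n.-1 : 'I_n.+1) = n.-1.
Proof. by rewrite inordK // ltnS leq_pred. Qed.

Lemma ord_max_neq_predn : (ord_max : 'I_n.+1) != inord n.-1.
Proof. rewrite -val_eqE /= inord_predn; apply/eqP; move: Hn; clear; lia. Qed.

Lemma pos_leaf (i : 'I_n.+1) : (i < n)%N -> pos (f i) = (INR i, INR i).
Proof.
move=> H.
have fr : f i != r.
  rewrite Hr; apply/eqP => /finj /(congr1 val) /= Ei; by rewrite Ei ltnn in H.
have [h1 h2] := leaf_interval (f_leaf i) fr.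
by rewrite /pos h1 h2 cyc_index_f.
Qed.

Lemma pos_root : pos r = (0, INR n).
Proof. by have [h1 h2] := root_interval; rewrite /pos h1 h2. Qed.

Lemma ends_cycle_edge i : ((ends (g i)).1 = f i /\ (ends (g i)).2 = f (ordS i)) \/
                 ((ends (g i)).1 = f (ordS i) /\ (ends (g i)).2 = f i).
Proof.
by move: (joins_ends (Hfg i)) => /orP[] /andP [/eqP -> /eqP ->]; [left | right].
Qed.

Lemma bend_path (i : 'I_n.+1) : (i.+1 < n)%N -> bend (g i) = 0.
Proof.
move=> H; rewrite /bend; case: eqP => [/ginj E'|_]; first by move: H; rewrite E' /=; lia.
case: eqP => [/ginj E'|//]; move: H; rewrite E' inord_predn; lia.
Qed.

Lemma arc_path_edge (i : 'I_n.+1) t : (i.+1 < n)%N -> exists s,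
  (s = t \/ s = 1 - t) /\ arc (g i) t = (INR i + s, INR i + s).
Proof.
move=> H.
have wi := bend_path H.
have oS : nat_of_ord (ordS i) = i.+1 by rewrite /= modn_small //; lia.
have p1 : pos (f i) = (INR i, INR i) by apply: pos_leaf; lia.
have p2 : pos (f (ordS i)) = (INR i + 1, INR i + 1).
  by rewrite pos_leaf ?oS // S_INR.
rewrite /arc wi; case: (ends_cycle_edge i) => [[-> ->]|[-> ->]]; rewrite p1 p2 /=.
  by exists t; split; [left | congr pair; ring].
by exists (1 - t); split; [right | congr pair; ring].
Qed.

Lemma arc_edge_to_root t : exists s, (s = t \/ s = 1 - t) /\
  arc (g (inord n.-1)) t = (s * (INR n - 1) + s * (1 - s), INR n - s + s * (1 - s)).
Proof.
set i : 'I_n.+1 := inord n.-1.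
have wi : bend (g i) = 1.
  rewrite /bend; case: eqP => [/ginj E'|_]; last by rewrite eqxx.
  by move: ord_max_neq_predn; rewrite -/i E' eqxx.
have oS : ordS i = ord_max.
  have h0 : (0 < n)%N by move: Hn; clear; lia.
  by apply: val_inj; rewrite /= inord_predn (prednK h0) modn_small.
have p1 : pos (f i) = (INR n - 1, INR n - 1).
  rewrite pos_leaf /i inord_predn; last lia.
  by rewrite -{3 4}(prednK (n := n)) ?S_INR; [congr pair; ring | lia].
have p2 : pos (f (ordS i)) = (0, INR n) by rewrite oS -Hr pos_root.
rewrite /arc wi; case: (ends_cycle_edge i) => [[-> ->]|[-> ->]]; rewrite p1 p2 /=.
  by exists (1 - t); split; [right | congr pair; ring].
by exists t; split; [left | congr pair; ring].
Qed.

Lemma arc_edge_from_root t : exists s, (s = t \/ s = 1 - t) /\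
  arc (g ord_max) t = (- (s * (1 - s)), (1 - s) * INR n - s * (1 - s)).
Proof.
have wi : bend (g ord_max) = (-1) by rewrite /bend eqxx.
have oS : ordS (ord_max : 'I_n.+1) = ord0 by apply: val_inj; rewrite /= modnn.
have p1 : pos (f ord0) = (0, 0) by rewrite pos_leaf //=; lia.
have p2 : pos (f ord_max) = (0, INR n) by rewrite -Hr pos_root.
rewrite /arc wi; case: (ends_cycle_edge ord_max) => [[-> ->]|[-> ->]]; rewrite oS p1 p2 /=.
  by exists t; split; [left | congr pair; ring].
by exists (1 - t); split; [right | congr pair; ring].
Qed.

Lemma arc_tree_edge e t : e \in ET -> exists c p s,
  [/\ joins ends e c p, below c p, c != p, (s = t \/ s = 1 - t) &
   arc e t = ((1 - s) * INR (lo p) + s * INR (lo c),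
              (1 - s) * INR (hi p) + s * INR (hi c))].
Proof.
move=> eT; have J := joins_endpoints ends e.
have ne := joins_neq (@noloop) J.
rewrite /arc (bend_tree eT) /pos /=.
case/orP: (tree_edge_below eT J) => H.
- exists (ends e).1, (ends e).2, (1 - t); split => //; first by right.
  congr pair; ring.
- exists (ends e).2, (ends e).1, t; split => //; first by rewrite joinsC.
  + by rewrite eq_sym.
  + by left.
  + congr pair; ring.
Qed.

Lemma edge_cases e : [\/ e \in ET, exists2 i : 'I_n.+1, (i.+1 < n)%N & e = g i,
  e = g (inord n.-1) | e = g ord_max].
Proof.
case/orP: (HEall e) => [eT|]; first by apply: Or41.
rewrite HEC => /imsetP [i _ ->].
have := ltn_ord i; rewrite ltnS leq_eqVlt => /orP [/eqP Ei|Hi].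
  by apply: Or44; congr g; apply: val_inj.
case: (ltngtP i.+1 n) => H.
- by apply: Or42; exists i.
- by move: Hi H; clear; lia.
- by apply: Or43; congr g; apply: ord_inj; rewrite inord_predn; move: H; clear; lia.
Qed.

Lemma n_ge2 : 2 <= INR n.
Proof. have := leq_INR_le Hn; by rewrite (_ : INR 2 = 2) //; simpl; ring. Qed.

Lemma hi_n_root v : hi v = n -> v = r.
Proof.
move=> E0; apply: root_in_leaves_below; rewrite Hr -mem_interval_leaves_below E0 leqnn andbT.
by have := lo_le_hi v; rewrite E0.
Qed.

Lemma arc_tree_edge_open e t : e \in ET -> 0 < t -> t < 1 -> exists c p s,
  [/\ joins ends e c p, below c p, c != p, 0 < s /\ s < 1 &
   arc e t = ((1 - s) * INR (lo p) + s * INR (lo c),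
              (1 - s) * INR (hi p) + s * INR (hi c))].
Proof.
move=> eT t0 t1; have [c [p [s [J Hcp cp Hs Ea]]]] := arc_tree_edge t eT.
by exists c, p, s; split => //; apply: flip_open01 Hs t0 t1.
Qed.

Lemma tree_arc_bounds c p s : below c p -> 0 < s -> s < 1 ->
  let L := (1 - s) * INR (lo p) + s * INR (lo c) in
  let R := (1 - s) * INR (hi p) + s * INR (hi c) in
  [/\ INR (lo p) <= L, L <= INR (lo c), INR (hi c) <= R & R <= INR (hi p)].
Proof.
move=> H s0 s1 /=; have [ha hb] := below_interval H.
have [l1 l2] := convex_comb_between (leq_INR_le ha) (Rlt_le _ _ s0) (Rlt_le _ _ s1).
have [l3 l4] := convex_comb_between_rev (leq_INR_le hb) (Rlt_le _ _ s0) (Rlt_le _ _ s1).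
by split.
Qed.

Lemma arc_avoid_vertex e t v : 0 < t -> t < 1 -> arc e t <> pos v.
Proof.
move=> t0 t1 E0.
have aR := pos_INR (lo v).
case: (edge_cases e) => [eT|[i Hi Ei]| Ei | Ei]; rewrite ?Ei in E0.
- have [c [p [s [J Hcp cp [s0 s1] Ea]]]] := arc_tree_edge_open eT t0 t1.
  rewrite Ea /pos in E0; case: E0 => EL ER.
  have [la1 la2 lb1 lb2] := tree_arc_bounds Hcp s0 s1.
  rewrite EL ER in la1 la2 lb1 lb2.
  have Hcv : below c v := interval_below (INR_le_leq la2) (INR_le_leq lb1).
  have Hvp : below v p := interval_below (INR_le_leq la1) (INR_le_leq lb2).
  case: (tree_edge_cover eT J Hcv Hvp) => Ev; subst v.
  + have A := INR_eq _ _ (convex_comb_eq_r s1 EL); have B := INR_eq _ _ (convex_comb_eq_r s1 ER).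
    by move: cp; rewrite (interval_inj A B) eqxx.
  + have A := INR_eq _ _ (convex_comb_eq_l s0 EL); have B := INR_eq _ _ (convex_comb_eq_l s0 ER).
    by move: cp; rewrite (interval_inj A B) eqxx.
- have [s [Hs Ea]] := arc_path_edge t Hi; have [s0 s1] := flip_open01 Hs t0 t1.
  rewrite Ea /pos in E0; case: E0 => EL ER.
  by apply: (@INR_between_succ i (lo v)); lra.
- have [s [Hs Ea]] := arc_edge_to_root t; have [s0 s1] := flip_open01 Hs t0 t1.
  rewrite Ea /pos in E0; case: E0 => EL ER.
  have H1 : INR n - 1 < INR (hi v) by rewrite -ER; nra.
  have H2 := INR_pred_lt_leq H1.
  have Eb : hi v = n by apply/eqP; rewrite eqn_leq hi_le_n H2.
  have Ev := hi_n_root Eb; subst v.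
  have [ha _] := root_interval; rewrite ha /= in EL.
  have := n_ge2; nra.
- have [s [Hs Ea]] := arc_edge_from_root t; have [s0 s1] := flip_open01 Hs t0 t1.
  rewrite Ea /pos in E0; case: E0 => EL ER.
  nra.
Qed.

Lemma children_intervals_disjoint c1 c2 e1 e2 p : e1 \in ET -> e2 \in ET -> joins ends e1 c1 p ->
  joins ends e2 c2 p -> below c1 p -> below c2 p -> c2 != p -> c1 != c2 ->
  (hi c1 < lo c2)%N \/ (hi c2 < lo c1)%N.
Proof.
move=> e1T e2T J1 J2 H1 H2 n2 d.
case: (ltnP (hi c1) (lo c2)) => h1; first by left.
case: (ltnP (hi c2) (lo c1)) => h2; first by right.
exfalso.
set k := maxn (lo c1) (lo c2).
have kn : (k < n.+1)%N.
  rewrite ltnS; apply: leq_trans (hi_le_n c1); rewrite geq_max lo_le_hi //.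
have k1 : f (inord k) \in leaves_below c1.
  rewrite -mem_interval_leaves_below inordK // leq_maxl /= geq_max lo_le_hi //.
have k2 : f (inord k) \in leaves_below c2.
  rewrite -mem_interval_leaves_below inordK // leq_maxr /= geq_max h2 lo_le_hi //.
move: k1 k2; rewrite !inE => /andP [_ K1] /andP [_ K2].
by move: d; rewrite (children_common_below e1T e2T J1 J2 H1 H2 n2 K1 K2) eqxx.
Qed.

Lemma tree_arcs_disjoint_below e1 e2 c1 p1 c2 p2 s1 s2 : e1 \in ET -> e2 \in ET -> e1 != e2 ->
  joins ends e1 c1 p1 -> joins ends e2 c2 p2 -> below c1 p1 -> below c2 p2 ->
  c1 != p1 -> c2 != p2 -> 0 < s1 -> s1 < 1 -> 0 < s2 -> s2 < 1 ->
  (1 - s1) * INR (lo p1) + s1 * INR (lo c1) = (1 - s2) * INR (lo p2) + s2 * INR (lo c2) ->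
  (1 - s1) * INR (hi p1) + s1 * INR (hi c1) = (1 - s2) * INR (hi p2) + s2 * INR (hi c2) ->
  below p1 p2 -> False.
Proof.
move=> e1T e2T ne J1 J2 H1 H2 n1 n2 s10 s11 s20 s21 EL ER H12.
have [a1 a2 b1 b2] := tree_arc_bounds H1 s10 s11.
have [a3 a4 b3 b4] := tree_arc_bounds H2 s20 s21.
simpl in a1, a2, b1, b2, a3, a4, b3, b4.
have Hc2p1 : below c2 p1.
  apply: interval_below; apply: INR_le_leq; lra.
case: (tree_edge_cover e2T J2 Hc2p1 H12) => Ep.
- subst p1.
  have LA : (1 - s1) * INR (lo c2) + s1 * INR (lo c1) = INR (lo c2) by lra.
  have RA : (1 - s1) * INR (hi c2) + s1 * INR (hi c1) = INR (hi c2) by lra.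
  have A := INR_eq _ _ (convex_comb_eq_l s10 LA); have B := INR_eq _ _ (convex_comb_eq_l s10 RA).
  by move: n1; rewrite (interval_inj A B) eqxx.
- subst p2.
  case: (c1 =P c2) => [Ec|/eqP d].
    subst c2; by move: ne; rewrite (tree_no_parallel e1T e2T J1 J2) eqxx.
  have [ha1 hb1] := below_interval H1; have [ha2 hb2] := below_interval H2.
  have o1 := lo_le_hi c1; have o2 := lo_le_hi c2.
  case: (children_intervals_disjoint e1T e2T J1 J2 H1 H2 n2 d) => h.
  + apply: (convex_comb_separated (leq_INR_le ha1) (leq_INR_le o1) _
      (leq_INR_le o2) (leq_INR_le hb2)
      s10 s11 s20 s21 EL ER).
    by apply: lt_INR; apply/ltP.
  + apply: (convex_comb_separated (leq_INR_le ha2) (leq_INR_le o2) _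
      (leq_INR_le o1) (leq_INR_le hb1)
      s20 s21 s10 s11 (esym EL) (esym ER)).
    by apply: lt_INR; apply/ltP.
Qed.

Lemma tree_arcs_disjoint e1 e2 t1 t2 : e1 \in ET -> e2 \in ET -> 0 < t1 -> t1 < 1 ->
  0 < t2 -> t2 < 1 -> arc e1 t1 = arc e2 t2 -> e1 = e2.
Proof.
move=> e1T e2T t10 t11 t20 t21 E0.
case: (e1 =P e2) => // /eqP ne; exfalso.
have [c1 [p1 [s1 [J1 H1 n1 [s10 s11] Ea1]]]] := arc_tree_edge_open e1T t10 t11.
have [c2 [p2 [s2 [J2 H2 n2 [s20 s21] Ea2]]]] := arc_tree_edge_open e2T t20 t21.
rewrite Ea1 Ea2 in E0; case: E0 => EL ER.
have [a1 a2 b1 b2] := tree_arc_bounds H1 s10 s11.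
have [a3 a4 b3 b4] := tree_arc_bounds H2 s20 s21.
simpl in a1, a2, b1, b2, a3, a4, b3, b4.
have Hc1p2 : below c1 p2 by apply: interval_below; apply: INR_le_leq; lra.
case/orP: (below_chain H1 Hc1p2) => H.
- exact: (tree_arcs_disjoint_below e1T e2T ne J1 J2 H1 H2 n1 n2 s10 s11 s20 s21 EL ER H).
- by apply: (tree_arcs_disjoint_below e2T e1T _ J2 J1 H2 H1 n2 n1 s20 s21 s10 s11
    (esym EL) (esym ER) H);
    rewrite eq_sym.
Qed.

Lemma arc_point_cases e t : 0 < t -> t < 1 -> [\/ e \in ET,
  exists (i : 'I_n.+1) s, [/\ (i.+1 < n)%N, e = g i, 0 < s /\ s < 1 &
               arc e t = (INR i + s, INR i + s)],
  exists s, [/\ e = g (inord n.-1), 0 < s /\ s < 1 &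
     arc e t = (s * (INR n - 1) + s * (1 - s), INR n - s + s * (1 - s))] |
  exists s, [/\ e = g ord_max, 0 < s /\ s < 1 &
     arc e t = (- (s * (1 - s)), (1 - s) * INR n - s * (1 - s))]].
Proof.
move=> t0 t1; case: (edge_cases e) => [eT|[i Hi Ei]|Ei|Ei]; first by apply: Or41.
- apply: Or42; have [s [Hs Ea]] := arc_path_edge t Hi.
  by exists i, s; rewrite Ei; split => //; apply: flip_open01 Hs t0 t1.
- apply: Or43; have [s [Hs Ea]] := arc_edge_to_root t.
  by exists s; rewrite Ei; split => //; apply: flip_open01 Hs t0 t1.
- apply: Or44; have [s [Hs Ea]] := arc_edge_from_root t.
  by exists s; rewrite Ei; split => //; apply: flip_open01 Hs t0 t1.
Qed.

Lemma tree_arc_off_diagonal e t (i : nat) x : e \in ET -> 0 < t -> t < 1 ->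
  INR i < x -> x < INR i + 1 ->
  arc e t = (x, x) -> False.
Proof.
move=> eT t0 t1 h1 h2 E0.
have [c [p [s [J H np [s0 s1] Ea]]]] := arc_tree_edge_open eT t0 t1.
rewrite Ea in E0; case: E0 => EL ER.
have [a1 a2 b1 b2] := tree_arc_bounds H s0 s1; simpl in a1, a2, b1, b2.
have o := leq_INR_le (lo_le_hi c).
have Ex : x = INR (lo c) by lra.
apply: (@INR_between_succ i (lo c)); lra.
Qed.

Lemma tree_arc_off_edge_to_root e t s : e \in ET -> 0 < t -> t < 1 -> 0 < s -> s < 1 ->
  arc e t = (s * (INR n - 1) + s * (1 - s), INR n - s + s * (1 - s)) -> False.
Proof.
move=> eT t0 t1 s0 s1 E0.
have [c [p [s' [J H np [s0' s1'] Ea]]]] := arc_tree_edge_open eT t0 t1.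
rewrite Ea in E0; case: E0 => EL ER.
have [a1 a2 b1 b2] := tree_arc_bounds H s0' s1'; simpl in a1, a2, b1, b2.
have H1 : INR n - 1 < INR (hi p) by nra.
have Eb : hi p = n by apply/eqP; rewrite eqn_leq hi_le_n (INR_pred_lt_leq H1).
have Ep := hi_n_root Eb; subst p.
have cr : c != r by [].
have A0 := root_child_lo eT J cr.
rewrite A0 /= in a2 EL.
have := pos_INR (lo r); have := n_ge2; nra.
Qed.

Lemma tree_arc_off_edge_from_root e t s : e \in ET -> 0 < t -> t < 1 -> 0 < s -> s < 1 ->
  arc e t = (- (s * (1 - s)), (1 - s) * INR n - s * (1 - s)) -> False.
Proof.
move=> eT t0 t1 s0 s1 E0.
have [c [p [s' [J H np [s0' s1'] Ea]]]] := arc_tree_edge_open eT t0 t1.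
rewrite Ea in E0; case: E0 => EL ER.
have [a1 a2 b1 b2] := tree_arc_bounds H s0' s1'; simpl in a1, a2, b1, b2.
have := pos_INR (lo p); nra.
Qed.

Lemma arc_cross e e' t t' : 0 < t -> t < 1 -> 0 < t' -> t' < 1 ->
  arc e t = arc e' t' -> e = e'.
Proof.
move=> t0 t1 t0' t1' E0.
have ng := n_ge2.
case: (arc_point_cases e t0 t1)
  => [eT|[i [s [Hi Ei [s0 s1] Ea]]]|[s [Ei [s0 s1] Ea]]|[s [Ei [s0 s1] Ea]]];
case: (arc_point_cases e' t0' t1')
  => [eT'|[j [s' [Hj Ej [s0' s1'] Ea']]]|[s' [Ej [s0' s1'] Ea']]|[s' [Ej [s0' s1'] Ea']]].
- exact: tree_arcs_disjoint eT eT' t0 t1 t0' t1' E0.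
- exfalso; rewrite Ea' in E0; apply: (tree_arc_off_diagonal (i := j) eT t0 t1 _ _ E0); lra.
- exfalso; rewrite Ea' in E0; exact: (tree_arc_off_edge_to_root eT t0 t1 s0' s1' E0).
- exfalso; rewrite Ea' in E0; exact: (tree_arc_off_edge_from_root eT t0 t1 s0' s1' E0).
- exfalso; rewrite Ea in E0; apply: (tree_arc_off_diagonal (i := i) eT' t0' t1' _ _ (esym E0)); lra.
- rewrite Ea Ea' in E0; case: E0 => EL _.
  have hij : i = j :> nat.
    have A1 : INR i < INR j + 1 by lra.
    have A2 : INR j < INR i + 1 by lra.
    rewrite -S_INR in A1; rewrite -S_INR in A2.
    have := INR_lt _ _ A1; have := INR_lt _ _ A2; lia.
  by rewrite Ei Ej; congr g; apply: val_inj.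
- exfalso; rewrite Ea Ea' in E0; case: E0 => EL ER; nra.
- exfalso; rewrite Ea Ea' in E0; case: E0 => EL ER; nra.
- exfalso; rewrite Ea in E0; exact: (tree_arc_off_edge_to_root eT' t0' t1' s0 s1 (esym E0)).
- exfalso; rewrite Ea Ea' in E0; case: E0 => EL ER; nra.
- by rewrite Ei Ej.
- exfalso; rewrite Ea Ea' in E0; case: E0 => EL ER; nra.
- exfalso; rewrite Ea in E0; exact: (tree_arc_off_edge_from_root eT' t0' t1' s0 s1 (esym E0)).
- exfalso; rewrite Ea Ea' in E0; case: E0 => EL ER; nra.
- exfalso; rewrite Ea Ea' in E0; case: E0 => EL ER; nra.
- by rewrite Ei Ej.
Qed.

Lemma pos_inj : injective pos.
Proof.
move=> u v; rewrite /pos => -[A B].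
by apply: interval_inj; apply: INR_eq.
Qed.

Lemma arc_nondegenerate e : (bend e = 0 /\ pos (ends e).1 <> pos (ends e).2) \/
  ((pos (ends e).2).2 - (pos (ends e).2).1 <> (pos (ends e).1).2 - (pos (ends e).1).1).
Proof.
have pd : pos (ends e).1 <> pos (ends e).2 by move/pos_inj; apply: (@noloop e).
case: (edge_cases e) => [eT|[i Hi Ei]|Ei|Ei].
- by left; split => //; rewrite bend_tree.
- by left; split => //; rewrite Ei bend_path.
- right; rewrite Ei.
  have pr : (pos r).2 - (pos r).1 = INR n by rewrite pos_root /=; ring.
  have pl : (pos (f (inord n.-1))).2 - (pos (f (inord n.-1))).1 = 0.
    rewrite pos_leaf /=; first ring.
    rewrite inord_predn; move: Hn; clear; lia.
  have oS : ordS (inord n.-1 : 'I_n.+1) = ord_max.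
    have h0 : (0 < n)%N by move: Hn; clear; lia.
    by apply: val_inj; rewrite /= inord_predn (prednK h0) modn_small.
  have ng := n_ge2.
  case: (ends_cycle_edge (inord n.-1)) => [[-> ->]|[-> ->]]; rewrite oS -Hr pr pl; lra.
- right; rewrite Ei.
  have pr : (pos r).2 - (pos r).1 = INR n by rewrite pos_root /=; ring.
  have pl : (pos (f ord0)).2 - (pos (f ord0)).1 = 0.
    by rewrite pos_leaf /=; [ring | move: Hn; clear; lia].
  have oS : ordS (ord_max : 'I_n.+1) = ord0 by apply: val_inj; rewrite /= modnn.
  have ng := n_ge2.
  case: (ends_cycle_edge ord_max) => [[-> ->]|[-> ->]]; rewrite oS -Hr pr pl; lra.
Qed.

Lemma arc_inj e t t' : arc e t = arc e t' -> t = t'.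
Proof.
rewrite /arc; move: (arc_nondegenerate e).
move: (pos (ends e).1) (pos (ends e).2) (bend e) => [a b] [c d] w /= K [E1 E2].
case: (Req_dec t t') => // ne; exfalso.
have N : t - t' <> 0 by lra.
have F1 : (t - t') * (c - a + w * (1 - t - t')) = 0 by lra.
have F2 : (t - t') * (d - b + w * (1 - t - t')) = 0 by lra.
case/Rmult_integral: F1 => // F1; case/Rmult_integral: F2 => // F2.
case: K => [[w0 pd]|K].
  by apply: pd; subst w; congr pair; lra.
by apply: K; lra.
Qed.

Lemma planar_embedding : planar ends.
Proof.
exists pos, arc; split.
- exact: pos_inj.
- move=> e; split.
  + rewrite /arc; apply: (@cont01_quadratic _
      (pos (ends e).1).1 ((pos (ends e).2).1 - (pos (ends e).1).1)
      (bend e) (pos (ends e).1).2 ((pos (ends e).2).2 - (pos (ends e).1).2) (bend e)) => s.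
    congr pair; ring.
  + by rewrite /arc; move: (pos _) (pos _) => [a b] [c d] /=; congr pair; ring.
  + by rewrite /arc; move: (pos _) (pos _) => [a b] [c d] /=; congr pair; ring.
- move=> e e' t t' t0 t1 t0' t1' E0.
  have endp : forall x, arc e' x = pos (ends e').1 \/ arc e' x = pos (ends e').2 ->
      arc e t = arc e' x -> False.
    move=> x [] Ex E1.
      by apply: (@arc_avoid_vertex e t (ends e').1 t0 t1); rewrite E1 Ex.
    by apply: (@arc_avoid_vertex e t (ends e').2 t0 t1); rewrite E1 Ex.
  case: (Rle_lt_or_eq_dec _ _ t0') => [h0|h0]; last first.
    exfalso; subst t'; apply: (endp R0) E0; left.
    by rewrite /arc; move: (pos _) (pos _) => [a b] [c d] /=; congr pair; ring.
  case: (Rle_lt_or_eq_dec _ _ t1') => [h1|h1]; last first.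
    exfalso; subst t'; apply: (endp R1) E0; right.
    by rewrite /arc; move: (pos _) (pos _) => [a b] [c d] /=; congr pair; ring.
  have Ee := arc_cross t0 t1 h0 h1 E0; subst e'.
  by split => //; exact: (arc_inj E0).
- move=> e v t t0 t1; exact: (@arc_avoid_vertex e t v t0 t1).
Qed.

(** * 3-regularity *)

Lemma incident_cycle_edge i x : incident ends (g i) x = (x == f i) || (x == f (ordS i)).
Proof.
rewrite /incident; case: (ends_cycle_edge i) => [[-> ->]|[-> ->]];
  by rewrite ?(eq_sym (f i)) ?(eq_sym (f (ordS i))) // orbC.
Qed.

Lemma cycle_edges_at_leaf (j : 'I_n.+1) :
  [set e in EC | incident ends e (f j)] = [set g j; g (ord_pred j)].
Proof.
apply/setP => e; rewrite !inE; apply/andP/orP.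
- case; rewrite HEC => /imsetP [i _ ->]; rewrite incident_cycle_edge => /orP [] /eqP /finj Ei.
    by left; rewrite Ei.
  by right; rewrite Ei ordSK.
- case => /eqP ->; split; rewrite ?HEC ?imset_f // incident_cycle_edge.
    by rewrite eqxx.
  by rewrite ord_predK eqxx orbT.
Qed.

Lemma cycle_edges_at_leaf_neq (j : 'I_n.+1) : g j != g (ord_pred j).
Proof.
apply/negP => /eqP /ginj E0.
have : ordS j = j by rewrite {1}E0 ord_predK.
move/(congr1 val) => /=.
have := ltn_ord j; rewrite ltnS leq_eqVlt => /orP [/eqP ->|H].
  rewrite modnn; move: Hn; clear; lia.
rewrite modn_small //; lia.
Qed.

Lemma cycle_edges_at_internal v : v \notin Lv -> [set e in EC | incident ends e v] = set0.
Proof.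
move=> vL; apply/setP => e; rewrite !inE; apply/negP => /andP [].
rewrite HEC => /imsetP [i _ ->]; rewrite incident_cycle_edge => /orP [] /eqP Ev;
  by move: vL; rewrite Ev f_leaf.
Qed.

Lemma deg3 v : deg ends [set: E] v = 3%N.
Proof.
rewrite /deg.
have -> : [set e in [set: E] | incident ends e v] =
   [set e in ET | incident ends e v] :|: [set e in EC | incident ends e v].
  apply/setP => e; rewrite !inE; case: (incident ends e v); rewrite ?andbT ?andbF //.
  by move: (HEall e) => ->.
rewrite cardsU.
have -> : [set e in ET | incident ends e v] :&: [set e in EC | incident ends e v] = set0.
  apply/setP => e; rewrite !inE; case: sct => _ H _ _.
  apply/negP => /andP [/andP [eT _] /andP [eC _]].
  have X : e \in ET :&: EC by rewrite inE eT eC.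
  by move: X; rewrite H inE.
rewrite cards0 subn0.
case: (boolP (v \in Lv)) => vL.
  have := vL; rewrite /Lv /leaves inE => /andP [_ /eqP d1].
  rewrite -/(deg ends ET v) d1 -(leaf_f vL) cycle_edges_at_leaf cards2 cycle_edges_at_leaf_neq //.
have vr : v != r by apply: contraNneq vL => ->.
by rewrite -/(deg ends ET v) (internal_deg3 vL vr) cycle_edges_at_internal // cards0.
Qed.
End Tree.

Theorem lemma5p3 (V E : finType) (ends : E -> V * V) (l : E -> R)
  (VT : {set V}) (ET : {set E}) (VC : {set V}) (EC : {set E}) :
  (forall e, (ends e).1 <> (ends e).2) ->
  (forall e, Rlt R0 (l e)) ->
  (forall v, (v \in VT) || (v \in VC)) ->
  (forall e, (e \in ET) || (e \in EC)) ->
  is_tree ends VT ET ->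
  is_cycle ends VC EC ->
  shortcut_tree ends l VT ET VC EC ->
  VC = leaves ends VT ET ->
  3 <= #|leaves ends VT ET| ->
  (forall v, v \in VT -> deg ends ET v <> 2) ->
  planar ends /\ (forall v, deg ends [set: E] v = 3).
Proof.
move=> noloop lpos Hcov HEall tree cyc sct HVCL h3 nondeg2.
have HVT : forall v, v \in VT.
  move=> v; case/orP: (Hcov v) => // vC; rewrite HVCL in vC.
  by move: vC; rewrite /leaves inE => /andP [].
case: cyc => k [f [g [[Hk finj ginj Hfg] [HVC HEC]]]].
case: k f g Hk finj ginj Hfg HVC HEC => [//|n] f g Hk finj ginj Hfg HVC HEC.
have Hn : 1 < n.
  by move: h3; rewrite -HVCL HVC card_imset // card_ord.
have rleaf : f ord_max \in leaves ends VT ET by rewrite -HVCL HVC imset_f.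
split.
- exact: (planar_embedding noloop HVT tree rleaf nondeg2 Hn finj ginj Hfg HVC HEC HVCL
    erefl lpos sct HEall).
- move=> v; exact: (deg3 noloop HVT tree rleaf nondeg2 Hn finj ginj Hfg HVC HEC
    HVCL erefl lpos sct HEall v).
Qed.
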